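(* Let $B=b_{20}D^2+b_{11}MD+b_{02}M^2+b_{10}D+b_{01}M+b_{00}I$ with $b_{20}\ne0$ and $\Delta_2\ne0$. Then the equation $Bu=0$ has the two linearly independent analytic solutions $u_j(x)=\exp\!\left(-\frac{\mathrm i}{4b_{20}}(b_{11}x^2+2b_{10}x)\right)v_j(x)$, $j=1,2$, where $v_j(x)=w_j\!\left(\left(-\frac{\Delta_2}{4b_{20}^2}\right)^{1/4}\left(x+\frac{\Delta_1}{2\Delta_2}\right)\right)$, $w_1(z)=\mathrm e^{-z^2/2}\Phi\!\left(\frac{1-\lambda}4,\frac12;z^2\right)$, $w_2(z)=\mathrm e^{-z^2/2}z\Phi\!\left(\frac{3-\lambda}4,\frac32;z^2\right)$, and $\lambda=\frac18\left(-\frac{\Delta_2}{b_{20}^2}\right)^{-3/2}\frac{\Delta_1^2-4\Delta_2\Delta_0}{b_{20}^4}$.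
   Context: $D=-\mathrm i\,d/dx$, $M$ = multiplication by $x$. $\Delta_2=b_{11}^2-4b_{20}b_{02}$, $\Delta_1=2b_{11}b_{10}-4b_{20}b_{01}$, $\Delta_0=b_{10}^2-4b_{20}b_{00}-2\mathrm i b_{20}b_{11}$. Powers: $z^\mu=\mathrm e^{\mu\log|z|+\mathrm i\mu\operatorname{Arg}z}$ with principal argument $\operatorname{Arg}z\in(-\pi,\pi]$. $\Phi(p,q;z)=\sum_{k\ge0}\frac{(p)_k}{k!(q)_k}z^k$ with $(p)_0=1$, $(p)_k=p(p+1)\cdots(p+k-1)$. *)

From Stdlib Require Import Reals Lra Arith ClassicalEpsilon.
Open Scope R_scope.

Definition CC : Type := (R * R)%type.
Definition RtoC (r : R) : CC := (r, 0).
Definition C0 : CC := (0, 0).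
Definition C1 : CC := (1, 0).
Definition Ci : CC := (0, 1).
Definition Cadd (z w : CC) : CC := (fst z + fst w, snd z + snd w).
Definition Copp (z : CC) : CC := (- fst z, - snd z).
Definition Csub (z w : CC) : CC := Cadd z (Copp w).
Definition Cmul (z w : CC) : CC :=
  (fst z * fst w - snd z * snd w, fst z * snd w + snd z * fst w).
Definition Cinv (z : CC) : CC :=
  (fst z / (fst z ^ 2 + snd z ^ 2), - snd z / (fst z ^ 2 + snd z ^ 2)).
Definition Cdiv (z w : CC) : CC := Cmul z (Cinv w).
Definition Cnorm (z : CC) : R := sqrt (fst z ^ 2 + snd z ^ 2).
Fixpoint Cpown (z : CC) (n : nat) : CC :=
  match n with O => C1 | S k => Cmul z (Cpown z k) end.

Definition Cexp (z : CC) : CC := (exp (fst z) * cos (snd z), exp (fst z) * sin (snd z)).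

(** Principal argument, with values in (-PI, PI]. *)
Definition Arg (z : CC) : R :=
  let x := fst z in let y := snd z in
  if Rlt_dec 0 x then atan (y / x)
  else if Rlt_dec x 0 then
         (if Rle_dec 0 y then atan (y / x) + PI else atan (y / x) - PI)
  else if Rlt_dec 0 y then PI / 2
  else if Rlt_dec y 0 then - (PI / 2)
  else 0.

(** Principal power z^mu = exp(mu log|z| + i mu Arg z) (used only for z <> 0). *)
Definition Clog (z : CC) : CC := (ln (Cnorm z), Arg z).
Definition Cpow (z mu : CC) : CC := Cexp (Cmul mu (Clog z)).

Fixpoint Csum (f : nat -> CC) (N : nat) : CC :=
  match N with O => f O | S k => Cadd (Csum f k) (f (S k)) end.
Definition Cseries_cv (f : nat -> CC) (l : CC) : Prop :=
  Un_cv (fun N => fst (Csum f N)) (fst l) /\ Un_cv (fun N => snd (Csum f N)) (snd l).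

Fixpoint poch (p : CC) (k : nat) : CC :=
  match k with O => C1 | S j => Cmul (poch p j) (Cadd p (RtoC (INR j))) end.

(** Kummer's function Phi(p,q;z) = sum_k (p)_k / (k! (q)_k) z^k, defined as the
    sum of the series (chosen by the epsilon operator; the series converges
    for the parameters used below). *)
Definition Phi_term (p q z : CC) (k : nat) : CC :=
  Cmul (Cdiv (poch p k) (Cmul (RtoC (INR (Factorial.fact k))) (poch q k))) (Cpown z k).
Definition Phi (p q z : CC) : CC :=
  epsilon (inhabits C0) (fun l => Cseries_cv (Phi_term p q z) l).

Definition Cderiv_at (u : R -> CC) (x : R) (l : CC) : Prop :=
  derivable_pt_lim (fun t => fst (u t)) x (fst l) /\
  derivable_pt_lim (fun t => snd (u t)) x (snd l).

Definition C_analytic (u : R -> CC) : Prop :=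
  forall x0 : R, exists r : R, 0 < r /\ exists a : nat -> CC,
    forall x : R, Rabs (x - x0) < r ->
      Cseries_cv (fun n => Cmul (a n) (Cpown (RtoC (x - x0)) n)) (u x).

(** * The operator B = b20 D^2 + b11 M D + b02 M^2 + b10 D + b01 M + b00 I,
    D = -i d/dx, M = multiplication by x.
    Given u' and u'' (first and second derivatives), with D u = -i u' and
    D^2 u = - u'', the value (B u)(x) is: *)
Definition B_apply (b20 b11 b02 b10 b01 b00 : CC) (u u1 u2 : R -> CC) (x : R) : CC :=
  let X := RtoC x in
  let Du := Cmul (Copp Ci) (u1 x) in
  let D2u := Copp (u2 x) in
  Cadd (Cmul b20 D2u)
  (Cadd (Cmul b11 (Cmul X Du))
  (Cadd (Cmul b02 (Cmul (Cmul X X) (u x)))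
  (Cadd (Cmul b10 Du)
  (Cadd (Cmul b01 (Cmul X (u x)))
        (Cmul b00 (u x)))))).

Definition solves_B (b20 b11 b02 b10 b01 b00 : CC) (u : R -> CC) : Prop :=
  exists u1 u2 : R -> CC,
    forall x : R, Cderiv_at u x (u1 x) /\ Cderiv_at u1 x (u2 x) /\
                  B_apply b20 b11 b02 b10 b01 b00 u u1 u2 x = C0.

Definition lin_indep2 (f g : R -> CC) : Prop :=
  forall c1 c2 : CC, (forall x : R, Cadd (Cmul c1 (f x)) (Cmul c2 (g x)) = C0) ->
    c1 = C0 /\ c2 = C0.

Definition Delta2 (b20 b11 b02 : CC) : CC :=
  Csub (Cmul b11 b11) (Cmul (RtoC 4) (Cmul b20 b02)).
Definition Delta1 (b20 b11 b10 b01 : CC) : CC :=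
  Csub (Cmul (RtoC 2) (Cmul b11 b10)) (Cmul (RtoC 4) (Cmul b20 b01)).
Definition Delta0 (b20 b11 b10 b00 : CC) : CC :=
  Csub (Csub (Cmul b10 b10) (Cmul (RtoC 4) (Cmul b20 b00)))
       (Cmul (Cmul (RtoC 2) Ci) (Cmul b20 b11)).

Definition lam (b20 b11 b02 b10 b01 b00 : CC) : CC :=
  let D2 := Delta2 b20 b11 b02 in
  let D1 := Delta1 b20 b11 b10 b01 in
  let D0 := Delta0 b20 b11 b10 b00 in
  Cmul (RtoC (1/8))
   (Cmul (Cpow (Copp (Cdiv D2 (Cmul b20 b20))) (RtoC (-3/2)))
         (Cdiv (Csub (Cmul D1 D1) (Cmul (RtoC 4) (Cmul D2 D0))) (Cpown b20 4))).

Definition w1 (la z : CC) : CC :=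
  Cmul (Cexp (Copp (Cdiv (Cmul z z) (RtoC 2))))
       (Phi (Cdiv (Csub (RtoC 1) la) (RtoC 4)) (RtoC (1/2)) (Cmul z z)).
Definition w2 (la z : CC) : CC :=
  Cmul (Cexp (Copp (Cdiv (Cmul z z) (RtoC 2))))
       (Cmul z (Phi (Cdiv (Csub (RtoC 3) la) (RtoC 4)) (RtoC (3/2)) (Cmul z z))).

Definition zarg (b20 b11 b02 b10 b01 : CC) (x : R) : CC :=
  let D2 := Delta2 b20 b11 b02 in
  let D1 := Delta1 b20 b11 b10 b01 in
  Cmul (Cpow (Copp (Cdiv D2 (Cmul (RtoC 4) (Cmul b20 b20)))) (RtoC (1/4)))
       (Cadd (RtoC x) (Cdiv D1 (Cmul (RtoC 2) D2))).

Definition prefac (b20 b11 b10 : CC) (x : R) : CC :=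
  Cexp (Copp (Cmul (Cdiv Ci (Cmul (RtoC 4) b20))
                   (Cadd (Cmul b11 (RtoC (x ^ 2))) (Cmul (RtoC 2) (Cmul b10 (RtoC x)))))).

Definition u_sol1 (b20 b11 b02 b10 b01 b00 : CC) (x : R) : CC :=
  Cmul (prefac b20 b11 b10 x)
       (w1 (lam b20 b11 b02 b10 b01 b00) (zarg b20 b11 b02 b10 b01 x)).
Definition u_sol2 (b20 b11 b02 b10 b01 b00 : CC) (x : R) : CC :=
  Cmul (prefac b20 b11 b10 x)
       (w2 (lam b20 b11 b02 b10 b01 b00) (zarg b20 b11 b02 b10 b01 x)).

From Stdlib Require Import Reals Lra Lia Psatz ClassicalEpsilon FunctionalExtensionality.
From Coquelicot Require Import Coquelicot.
From Pilot Require Import Defs.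
Open Scope R_scope.

(** Write [u(x) = P(x) w(z(x))] with the prefactor
    [P(x) = exp (-(i/(4 b20)) (b11 x^2 + 2 b10 x))] and the affine change of
    variables [z(x) = c (x + Delta1/(2 Delta2))], [c^4 = -Delta2/(4 b20^2)].
    Completing the square shows that [B u = 0] becomes Weber's equation
    [w'' = (z^2 - lambda) w].  The functions [w1 = e^(-z^2/2) Phi((1-lambda)/4, 1/2; z^2)]
    and [w2 = e^(-z^2/2) z Phi((3-lambda)/4, 3/2; z^2)] solve it because
    Kummer's function satisfies [Z Phi'' + (q - Z) Phi' - p Phi = 0]; their
    Wronskian is constant (no first-order term), equal to [1] at [z = 0], which
    gives linear independence.  Analyticity holds for every solution of
    [B u = 0]: around each point the equation has polynomial coefficients, its
    formal power-series solution has an infinite radius of convergence, and an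
    energy (Gronwall) estimate identifies it with [u]. *)

(** The pairs [CC] of Defs are literally Coquelicot's complex numbers [C], and
    the operations of Defs unfold to Coquelicot's; [to_C] performs this change
    so that [ring], [field] and the lemmas on [Cmod] become available. *)
Lemma Cpown_Cpow : Cpown = Complex.Cpow.
Proof.
  apply functional_extensionality; intro z; apply functional_extensionality; intro n.
  induction n as [|n IH]; simpl; [reflexivity | now rewrite IH].
Qed.

Lemma Cadd_Cplus : Cadd = Cplus. Proof. reflexivity. Qed.
Lemma Csub_Cminus : Csub = Cminus. Proof. reflexivity. Qed.
Lemma Cmul_Cmult : Cmul = Cmult. Proof. reflexivity. Qed.
Lemma Copp_Copp : Defs.Copp = Complex.Copp. Proof. reflexivity. Qed.
Lemma Cdiv_Cdiv : Defs.Cdiv = Complex.Cdiv. Proof. reflexivity. Qed.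
Lemma Cinv_Cinv : Defs.Cinv = Complex.Cinv. Proof. reflexivity. Qed.
Lemma RtoC_RtoC : Defs.RtoC = Complex.RtoC. Proof. reflexivity. Qed.
Lemma C0_RtoC : C0 = Complex.RtoC 0. Proof. reflexivity. Qed.
Lemma C1_RtoC : C1 = Complex.RtoC 1. Proof. reflexivity. Qed.

Lemma RtoC_neq0 r : r <> 0 -> Complex.RtoC r <> Complex.RtoC 0.
Proof. intros H E. injection E. auto. Qed.

(** [ring] infers the carrier from the sides of the equation, which may be
    atoms of type [CC]; adding [0] turns both sides into [C]-terms. *)
Lemma C_eq_plus0 (a b : C) : Cplus a (Complex.RtoC 0) = Cplus b (Complex.RtoC 0) -> a = b.
Proof. rewrite !Cplus_0_r. auto. Qed.

(* Rewriting (rather than [change]) keeps the kernel from re-checking the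
   conversion between large terms. *)
Ltac to_C :=
  change CC with C in *;
  rewrite ?Cadd_Cplus, ?Csub_Cminus, ?Cmul_Cmult, ?Copp_Copp, ?Cdiv_Cdiv, ?Cinv_Cinv,
    ?RtoC_RtoC, ?C0_RtoC, ?C1_RtoC, ?Cpown_Cpow in *;
  try match goal with |- @eq _ ?a ?b => change (@eq C a b); apply C_eq_plus0 end.

(** Convergence of a sequence of complex numbers, componentwise; note that
    [Cseries_cv f l] is by definition [Cseq_cv (Csum f) l]. *)
Definition Cseq_cv (u : nat -> CC) (l : CC) : Prop :=
  Un_cv (fun n => fst (u n)) (fst l) /\ Un_cv (fun n => snd (u n)) (snd l).

Lemma Cseq_cv_unique u l1 l2 : Cseq_cv u l1 -> Cseq_cv u l2 -> l1 = l2.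
Proof.
  intros [H1 H2] [H3 H4]. destruct l1, l2; simpl in *.
  f_equal; eapply UL_sequence; eauto.
Qed.

Lemma Un_cv_const c : Un_cv (fun _ => c) c.
Proof. intros e He. exists 0%nat. intros. unfold Rdist. rewrite Rminus_diag, Rabs_R0. lra. Qed.

Lemma Cseq_cv_const c : Cseq_cv (fun _ => c) c.
Proof. split; apply Un_cv_const. Qed.

Lemma Cseq_cv_add u v l m :
  Cseq_cv u l -> Cseq_cv v m -> Cseq_cv (fun n => Cadd (u n) (v n)) (Cadd l m).
Proof. intros [H1 H2] [H3 H4]. split; simpl; apply CV_plus; auto. Qed.

Lemma Cseq_cv_sub u v l m :
  Cseq_cv u l -> Cseq_cv v m -> Cseq_cv (fun n => Csub (u n) (v n)) (Csub l m).
Proof. intros [H1 H2] [H3 H4]. split; simpl; apply CV_minus; auto. Qed.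

Lemma Cseq_cv_scal c u l : Cseq_cv u l -> Cseq_cv (fun n => Cmul c (u n)) (Cmul c l).
Proof.
  intros [H1 H2]. split; simpl.
  - apply CV_minus; apply CV_mult; auto; apply Un_cv_const.
  - apply CV_plus; apply CV_mult; auto; apply Un_cv_const.
Qed.

Lemma Cseq_cv_ext u v l : (forall n, u n = v n) -> Cseq_cv u l -> Cseq_cv v l.
Proof. intros E. replace v with u; auto. apply functional_extensionality; auto. Qed.

Lemma Un_cv_shift u l : Un_cv (fun n => u (S n)) l <-> Un_cv u l.
Proof.
  split; intros H e He; destruct (H e He) as [N HN].
  - exists (S N). intros [|n] Hn; [lia|]. apply HN. lia.
  - exists N. intros n Hn. apply HN. lia.
Qed.

Lemma Cseq_cv_shift u l : Cseq_cv (fun n => u (S n)) l <-> Cseq_cv u l.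
Proof.
  unfold Cseq_cv. rewrite (Un_cv_shift (fun n => fst (u n))), (Un_cv_shift (fun n => snd (u n))).
  tauto.
Qed.

Lemma Cmod_le_abs z : Cmod z <= Rabs (fst z) + Rabs (snd z).
Proof.
  destruct z as [a b]; unfold Cmod; simpl.
  pose proof (Rabs_pos a); pose proof (Rabs_pos b).
  rewrite <- (sqrt_Rsqr (Rabs a + Rabs b)) by lra.
  apply sqrt_le_1_alt. unfold Rsqr.
  replace (a * (a * 1) + b * (b * 1)) with (Rabs a * Rabs a + Rabs b * Rabs b).
  - nra.
  - rewrite <- !Rabs_mult, !Rabs_pos_eq by nra. ring.
Qed.

Lemma snd_le_Cmod z : Rabs (snd z) <= Cmod z.
Proof. eapply Rle_trans; [apply Rmax_r | apply Rmax_Cmod]. Qed.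

Lemma Cmod_dist_le a b : Rabs (Cmod a - Cmod b) <= Rabs (fst a - fst b) + Rabs (snd a - snd b).
Proof.
  pose proof (Cmod_le_abs (Cminus a b)) as Hab. pose proof (Cmod_le_abs (Cminus b a)) as Hba.
  simpl in Hab, Hba.
  pose proof (Cmod_triangle (Cminus a b) b) as Ta. pose proof (Cmod_triangle (Cminus b a) a) as Tb.
  replace (Cplus (Cminus a b) b) with a in Ta by (apply injective_projections; simpl; ring).
  replace (Cplus (Cminus b a) a) with b in Tb by (apply injective_projections; simpl; ring).
  rewrite <- (Rabs_Ropp (fst b + - fst a)), <- (Rabs_Ropp (snd b + - snd a)) in Hba.
  replace (- (fst b + - fst a)) with (fst a - fst b) in Hba by ring.
  replace (- (snd b + - snd a)) with (snd a - snd b) in Hba by ring.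
  apply Rabs_le. unfold Rminus in *. lra.
Qed.

Lemma Cseq_cv_Cmod u l : Cseq_cv u l -> Un_cv (fun n => Cmod (u n)) (Cmod l).
Proof.
  intros [H1 H2] e He.
  destruct (H1 (e / 2) ltac:(lra)) as [N1 HN1]. destruct (H2 (e / 2) ltac:(lra)) as [N2 HN2].
  exists (max N1 N2). intros n Hn.
  specialize (HN1 n ltac:(lia)). specialize (HN2 n ltac:(lia)). unfold Rdist in *.
  pose proof (Cmod_dist_le (u n) l). lra.
Qed.

Lemma Cseq_cv_Cmod_le u l B : Cseq_cv u l -> (forall n, Cmod (u n) <= B) -> Cmod l <= B.
Proof.
  intros Hu HB. apply (@Rle_cv_lim (fun n => Cmod (u n)) (fun _ => B)); auto.
  - apply Cseq_cv_Cmod; auto.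
  - apply Un_cv_const.
Qed.

Lemma fst_Csum f N : fst (Csum f N) = sum_f_R0 (fun n => fst (f n)) N.
Proof. induction N; simpl; auto. rewrite IHN; auto. Qed.
Lemma snd_Csum f N : snd (Csum f N) = sum_f_R0 (fun n => snd (f n)) N.
Proof. induction N; simpl; auto. rewrite IHN; auto. Qed.

Lemma Csum_ext f g N : (forall n, f n = g n) -> Csum f N = Csum g N.
Proof. intros E; induction N; simpl; rewrite ?IHN, ?E; auto. Qed.

Lemma Csum_add f g N : Csum (fun n => Cadd (f n) (g n)) N = Cadd (Csum f N) (Csum g N).
Proof. induction N; simpl; auto. rewrite IHN. to_C. ring. Qed.

Lemma Csum_sub f g N : Csum (fun n => Csub (f n) (g n)) N = Csub (Csum f N) (Csum g N).
Proof. induction N; simpl; auto. rewrite IHN. to_C. ring. Qed.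

Lemma Csum_scal c f N : Csum (fun n => Cmul c (f n)) N = Cmul c (Csum f N).
Proof. induction N; simpl; auto. rewrite IHN. to_C. ring. Qed.

Lemma Csum_first f N : Csum f (S N) = Cadd (f O) (Csum (fun n => f (S n)) N).
Proof. induction N; simpl in *; auto. rewrite IHN. to_C. ring. Qed.

Lemma Csum_Cmod f N : Cmod (Csum f N) <= sum_f_R0 (fun n => Cmod (f n)) N.
Proof. induction N; simpl. lra. eapply Rle_trans. apply Cmod_triangle. lra. Qed.

Lemma ex_series_dominated (f g : nat -> R) :
  (forall n, Rabs (f n) <= g n) -> ex_series g -> ex_series f.
Proof. intros H Hg. apply (ex_series_le f g); auto. Qed.

Lemma ex_series_nonneg_le (f g : nat -> R) :
  (forall n, 0 <= f n <= g n) -> ex_series g -> ex_series f.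
Proof.
  intros H. apply ex_series_dominated. intros n. rewrite Rabs_pos_eq; apply H.
Qed.

Lemma partial_sum_le_Series a N :
  (forall n, 0 <= a n) -> ex_series a -> sum_f_R0 a N <= Series a.
Proof.
  intros Hp He. apply sum_incr; auto. apply is_series_Reals, Series_correct, He.
Qed.

Definition entire (a : nat -> CC) : Prop :=
  forall rho, 0 <= rho -> ex_series (fun n => Cmod (a n) * rho ^ n).

Definition psum (a : nat -> CC) (z : CC) : CC :=
  (Series (fun n => fst (Cmul (a n) (Cpown z n))), Series (fun n => snd (Cmul (a n) (Cpown z n)))).

Lemma Cmod_monomial a z n : Cmod (Cmul a (Cpown z n)) = Cmod a * Cmod z ^ n.
Proof. to_C. rewrite Cmod_mult, Cmod_pow. auto. Qed.

Lemma psum_cv a z : entire a -> Cseries_cv (fun n => Cmul (a n) (Cpown z n)) (psum a z).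
Proof.
  intros Ha. pose proof (Ha (Cmod z) (Cmod_ge_0 z)) as Hs.
  assert (Hre : ex_series (fun n => fst (Cmul (a n) (Cpown z n)))).
  { apply (ex_series_dominated _ _ (fun n => Rle_trans _ _ _ (re_le_Cmod _)
      (Req_le _ _ (Cmod_monomial _ _ _)))); auto. }
  assert (Him : ex_series (fun n => snd (Cmul (a n) (Cpown z n)))).
  { apply (ex_series_dominated _ _ (fun n => Rle_trans _ _ _ (snd_le_Cmod _)
      (Req_le _ _ (Cmod_monomial _ _ _)))); auto. }
  split.
  - eapply Un_cv_ext; [intros N; symmetry; apply fst_Csum|].
    apply is_series_Reals, Series_correct, Hre.
  - eapply Un_cv_ext; [intros N; symmetry; apply snd_Csum|].
    apply is_series_Reals, Series_correct, Him.
Qed.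

Lemma psum_unique a z l : entire a -> Cseries_cv (fun n => Cmul (a n) (Cpown z n)) l -> psum a z = l.
Proof. intros Ha H. eapply Cseq_cv_unique; [apply (psum_cv a z Ha) | exact H]. Qed.

Lemma psum_ext a b z : (forall n, a n = b n) -> psum a z = psum b z.
Proof. intros E. replace b with a; auto. apply functional_extensionality; auto. Qed.

(** Coefficients of [z * f z] and of the derivative [f'] of [f = psum a]. *)
Definition pshift (a : nat -> CC) (n : nat) : CC := match n with O => C0 | S m => a m end.
Definition pderiv (a : nat -> CC) (n : nat) : CC := Cmul (RtoC (INR (S n))) (a (S n)).

Lemma entire_zero : entire (fun _ => C0).
Proof.
  intros rho Hr. apply (ex_series_ext (fun n => scal 0 ((1 / 2) ^ n))).
  - intros n. change (scal 0 ((1 / 2) ^ n)) with (0 * (1 / 2) ^ n). to_C. rewrite Cmod_0, !Rmult_0_l. reflexivity.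
  - apply (@ex_series_scal R_AbsRing R_NormedModule), ex_series_geom.
    rewrite Rabs_pos_eq; lra.
Qed.

Lemma entire_add a b : entire a -> entire b -> entire (fun n => Cadd (a n) (b n)).
Proof.
  intros Ha Hb rho Hr.
  apply (ex_series_nonneg_le _ (fun n => plus (Cmod (a n) * rho ^ n) (Cmod (b n) * rho ^ n))).
  - intros n. pose proof (pow_le rho n Hr). split.
    + apply Rmult_le_pos; auto; apply Cmod_ge_0.
    + change (plus ?x ?y) with (x + y). to_C. pose proof (Cmod_triangle (a n) (b n)). nra.
  - apply (@ex_series_plus R_AbsRing R_NormedModule); auto.
Qed.

Lemma entire_scal c a : entire a -> entire (fun n => Cmul c (a n)).
Proof.
  intros Ha rho Hr.
  apply (ex_series_nonneg_le _ (fun n => scal (Cmod c) (Cmod (a n) * rho ^ n))).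
  - intros n. pose proof (pow_le rho n Hr). change (scal ?x ?y) with (x * y). to_C.
    rewrite Cmod_mult. pose proof (Cmod_ge_0 c). pose proof (Cmod_ge_0 (a n)).
    split; [apply Rmult_le_pos; nra | lra].
  - apply (@ex_series_scal R_AbsRing R_NormedModule); auto.
Qed.

Lemma entire_pshift a : entire a -> entire (pshift a).
Proof.
  intros Ha rho Hr. apply ex_series_incr_1. simpl.
  apply (ex_series_nonneg_le _ (fun n => scal rho (Cmod (a n) * rho ^ n))).
  - intros n. pose proof (pow_le rho n Hr). change (scal ?x ?y) with (x * y).
    pose proof (Cmod_ge_0 (a n)). simpl pow.
    split; [apply Rmult_le_pos; [auto | apply Rmult_le_pos; auto] | right; ring].
  - apply (@ex_series_scal R_AbsRing R_NormedModule); auto.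
Qed.

Lemma INR_le_pow2 n : INR (S n) <= 2 ^ S n.
Proof.
  induction n. simpl; lra.
  rewrite S_INR. assert (1 <= 2 ^ S n) by (apply pow_R1_Rle; lra).
  change (2 ^ S (S n)) with (2 * 2 ^ S n). lra.
Qed.

(** Termwise differentiation preserves entireness, since [n+1 <= 2^(n+1)]. *)
Lemma entire_pderiv a : entire a -> entire (pderiv a).
Proof.
  intros Ha rho Hr.
  pose proof (Ha (2 * (rho + 1)) ltac:(lra)) as H. apply ex_series_incr_1 in H.
  eapply ex_series_nonneg_le; [|exact H]. intros n. simpl.
  unfold pderiv. to_C. rewrite Cmod_mult, Cmod_R, Rabs_pos_eq by apply pos_INR.
  pose proof (Cmod_ge_0 (a (S n))). pose proof (pow_le rho n Hr). pose proof (pos_INR (S n)).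
  pose proof (INR_le_pow2 n). simpl pow in *.
  assert (rho ^ n <= (rho + 1) ^ n) by (apply pow_incr; lra).
  pose proof (pow_le (rho + 1) n ltac:(lra)).
  rewrite Rpow_mult_distr.
  split; [apply Rmult_le_pos; [apply Rmult_le_pos|]; auto|].
  replace (Cmod (a (S n)) * (2 * (rho + 1) * (2 ^ n * (rho + 1) ^ n)))
    with (Cmod (a (S n)) * ((2 * 2 ^ n) * ((rho + 1) * (rho + 1) ^ n))) by ring.
  rewrite (Rmult_comm (INR (S n))), Rmult_assoc. apply Rmult_le_compat_l; auto.
  apply Rmult_le_compat; auto; nra.
Qed.

#[local] Hint Resolve entire_zero entire_add entire_scal entire_pshift entire_pderiv : entire.

Lemma psum_zero z : psum (fun _ => C0) z = C0.
Proof.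
  apply psum_unique; [apply entire_zero|]. eapply Cseq_cv_ext; [|apply Cseq_cv_const].
  intros N. induction N; simpl in *; [|rewrite <- IHN]; to_C; ring.
Qed.

Lemma psum_add a b z : entire a -> entire b ->
  psum (fun n => Cadd (a n) (b n)) z = Cadd (psum a z) (psum b z).
Proof.
  intros Ha Hb. apply psum_unique; [apply entire_add; auto|].
  eapply Cseq_cv_ext; [|apply (Cseq_cv_add _ _ _ _ (psum_cv a z Ha) (psum_cv b z Hb))].
  intros N. simpl. rewrite <- Csum_add. apply Csum_ext. intros n. to_C. ring.
Qed.

Lemma psum_scal c a z : entire a -> psum (fun n => Cmul c (a n)) z = Cmul c (psum a z).
Proof.
  intros Ha. apply psum_unique; [apply entire_scal; auto|].
  eapply Cseq_cv_ext; [|apply (Cseq_cv_scal c _ _ (psum_cv a z Ha))].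
  intros N. simpl. rewrite <- Csum_scal. apply Csum_ext. intros n. to_C. ring.
Qed.

Lemma psum_pshift a z : entire a -> psum (pshift a) z = Cmul z (psum a z).
Proof.
  intros Ha. apply psum_unique; [apply entire_pshift; auto|].
  apply Cseq_cv_shift. eapply Cseq_cv_ext; [|apply (Cseq_cv_scal z _ _ (psum_cv a z Ha))].
  intros N. rewrite Csum_first, <- Csum_scal. simpl.
  rewrite (Csum_ext (fun n => Cmul (a n) (Cmul z (Cpown z n))) (fun n => Cmul z (Cmul (a n) (Cpown z n))))
    by (intros; to_C; ring).
  to_C. ring.
Qed.

Lemma psum_at0 a : entire a -> psum a C0 = a O.
Proof.
  intros Ha. apply psum_unique; auto. eapply Cseq_cv_ext; [|apply Cseq_cv_const].
  intros N. induction N; simpl in *; [|rewrite <- IHN]; to_C; ring.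
Qed.

Definition binom_rem (w k : CC) (m : nat) : CC :=
  Csub (Csub (Cpown (Cadd w k) (S m)) (Cpown w (S m))) (Cmul (RtoC (INR (S m))) (Cmul k (Cpown w m))).

Lemma binom_rem_S w k m : binom_rem w k (S m) =
  Cadd (Cmul (Cadd w k) (binom_rem w k m)) (Cmul (RtoC (INR (S m))) (Cmul (Cmul k k) (Cpown w m))).
Proof.
  unfold binom_rem. rewrite (S_INR (S m)). simpl Cpown. to_C. rewrite RtoC_plus. ring.
Qed.

Lemma INR_S_pow_le t m : 1 <= t -> INR (S m) * t ^ m <= 3 * t * (4 * t) ^ S m.
Proof.
  intros Ht. rewrite Rpow_mult_distr.
  assert (INR (S m) <= 4 ^ S m) by (eapply Rle_trans; [apply INR_le_pow2 | apply pow_incr; lra]).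
  assert (1 <= t ^ m) by (apply pow_R1_Rle; lra).
  assert (t ^ m <= t ^ S m) by (simpl; nra).
  assert (0 <= 4 ^ S m) by (apply pow_le; lra).
  assert (t ^ S m <= 3 * t * t ^ S m) by nra.
  apply Rle_trans with (4 ^ S m * t ^ m); [apply Rmult_le_compat_r; lra|].
  replace (3 * t * (4 ^ S m * t ^ S m)) with (4 ^ S m * (3 * t * t ^ S m)) by ring.
  apply Rmult_le_compat_l; lra.
Qed.

Lemma binom_rem_bound w k t m : Cmod w + Cmod k <= t -> 1 <= t ->
  Cmod (binom_rem w k m) <= Cmod k ^ 2 * (4 * t) ^ S m.
Proof.
  intros Hs Ht. pose proof (Cmod_ge_0 w); pose proof (Cmod_ge_0 k).
  induction m as [|m IH].
  - replace (binom_rem w k 0) with C0 by (unfold binom_rem; simpl; to_C; ring).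
    to_C. rewrite Cmod_0. pose proof (pow2_ge_0 (Cmod k)). simpl. nra.
  - rewrite binom_rem_S. eapply Rle_trans; [to_C; apply Cmod_triangle|].
    to_C. rewrite !Cmod_mult, Cmod_R, Rabs_pos_eq, Cmod_pow by apply pos_INR.
    assert (Cmod (w + k)%C <= t) by (eapply Rle_trans; [apply Cmod_triangle | lra]).
    assert (Cmod w ^ m <= t ^ m) by (apply pow_incr; lra).
    pose proof (INR_S_pow_le t m Ht). pose proof (pos_INR (S m)).
    assert (0 <= Cmod w ^ m) by (apply pow_le; lra).
    assert (0 <= (4 * t) ^ S m) by (apply pow_le; lra).
    pose proof (Cmod_ge_0 (binom_rem w k m)).
    change ((4 * t) ^ S (S m)) with (4 * t * (4 * t) ^ S m).
    assert (Cmod (w + k)%C * Cmod (binom_rem w k m) <= t * (Cmod k ^ 2 * (4 * t) ^ S m))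
      by (apply Rmult_le_compat; auto; apply Cmod_ge_0).
    assert (INR (S m) * Cmod w ^ m <= INR (S m) * t ^ m) by (apply Rmult_le_compat_l; auto).
    assert (0 <= Cmod k * Cmod k) by nra.
    assert (Cmod k ^ 2 * (INR (S m) * t ^ m) <= Cmod k ^ 2 * (3 * t * (4 * t) ^ S m))
      by (apply Rmult_le_compat_l; auto; apply pow2_ge_0).
    simpl pow in *. nra.
Qed.

Lemma Csum_increment a w k N :
  Csub (Csub (Csum (fun n => Cmul (a n) (Cpown (Cadd w k) n)) (S N))
             (Csum (fun n => Cmul (a n) (Cpown w n)) (S N)))
       (Cmul k (Csum (fun n => Cmul (pderiv a n) (Cpown w n)) N))
  = Csum (fun m => Cmul (a (S m)) (binom_rem w k m)) N.
Proof.
  rewrite !Csum_first, <- Csum_scal.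
  transitivity (Csub (Csub (Csum (fun m => Cmul (a (S m)) (Cpown (Cadd w k) (S m))) N)
                           (Csum (fun m => Cmul (a (S m)) (Cpown w (S m))) N))
                     (Csum (fun n => Cmul k (Cmul (pderiv a n) (Cpown w n))) N)).
  - simpl Cpown. to_C. ring.
  - rewrite <- !Csum_sub. apply Csum_ext. intros m. unfold binom_rem, pderiv. to_C. ring.
Qed.

Lemma psum_increment a w k : entire a -> Cmod k <= 1 ->
  Cmod (Csub (Csub (psum a (Cadd w k)) (psum a w)) (Cmul k (psum (pderiv a) w))) <=
  Cmod k ^ 2 * Series (fun n => Cmod (a n) * (4 * (Cmod w + 1)) ^ n).
Proof.
  intros Ha Hk. set (t := Cmod w + 1). pose proof (Cmod_ge_0 w).
  set (g := fun n => Cmod (a n) * (4 * t) ^ n).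
  assert (Hg0 : forall n, 0 <= g n)
    by (intros n; apply Rmult_le_pos; [apply Cmod_ge_0 | apply pow_le; unfold t; lra]).
  assert (Hg : ex_series g) by (apply Ha; unfold t; lra).
  apply (Cseq_cv_Cmod_le (fun N => Csum (fun m => Cmul (a (S m)) (binom_rem w k m)) N)).
  - eapply Cseq_cv_ext; [intros N; apply Csum_increment|].
    apply Cseq_cv_sub; [apply Cseq_cv_sub|].
    + apply (Cseq_cv_shift (Csum _)), psum_cv; auto.
    + apply (Cseq_cv_shift (Csum _)), psum_cv; auto.
    + apply Cseq_cv_scal, psum_cv, entire_pderiv; auto.
  - intros N. eapply Rle_trans; [apply Csum_Cmod|].
    apply Rle_trans with (sum_f_R0 (fun m => Cmod k ^ 2 * g (S m)) N).
    + apply sum_Rle. intros m _. unfold g. to_C. rewrite Cmod_mult.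
      pose proof (binom_rem_bound w k t m ltac:(unfold t; lra) ltac:(unfold t; lra)).
      pose proof (Cmod_ge_0 (a (S m))).
      apply Rle_trans with (Cmod (a (S m)) * (Cmod k ^ 2 * (4 * t) ^ S m));
        [apply Rmult_le_compat_l; auto | right; ring].
    + replace (sum_f_R0 (fun m => Cmod k ^ 2 * g (S m)) N)
        with (Cmod k ^ 2 * sum_f_R0 (fun m => g (S m)) N)
        by (rewrite scal_sum; apply sum_eq; intros; ring).
      apply Rmult_le_compat_l; [apply pow2_ge_0|].
      apply Rle_trans with (sum_f_R0 g (S N)); [|apply partial_sum_le_Series; auto].
      rewrite (decomp_sum g (S N)) by lia. cbn [Init.Nat.pred]. pose proof (Hg0 O). lra.
Qed.

Lemma derivable_pt_lim_eq f x l1 l2 : derivable_pt_lim f x l1 -> l1 = l2 -> derivable_pt_lim f x l2.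
Proof. intros H E; subst; auto. Qed.

Lemma Cderiv_eq f x l1 l2 : Cderiv_at f x l1 -> l1 = l2 -> Cderiv_at f x l2.
Proof. intros H E; subst; auto. Qed.

Lemma Cderiv_ext f g x l : (forall t, f t = g t) -> Cderiv_at f x l -> Cderiv_at g x l.
Proof. intros E H. replace g with f; auto. apply functional_extensionality; auto. Qed.

Lemma Cderiv_unique f x l1 l2 : Cderiv_at f x l1 -> Cderiv_at f x l2 -> l1 = l2.
Proof.
  intros [H1 H2] [H3 H4]. destruct l1, l2; simpl in *.
  f_equal; eapply uniqueness_limite; eauto.
Qed.

Lemma Cderiv_const c x : Cderiv_at (fun _ => c) x C0.
Proof. split; simpl; apply derivable_pt_lim_const. Qed.

Lemma Cderiv_RtoC f x l : derivable_pt_lim f x l -> Cderiv_at (fun t => RtoC (f t)) x (RtoC l).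
Proof. intros H; split; simpl; auto. apply derivable_pt_lim_const. Qed.

Lemma Cderiv_id x : Cderiv_at (fun t => RtoC t) x C1.
Proof. apply (Cderiv_RtoC (fun t => t)), derivable_pt_lim_id. Qed.

Lemma Cderiv_add f g x l m : Cderiv_at f x l -> Cderiv_at g x m ->
  Cderiv_at (fun t => Cadd (f t) (g t)) x (Cadd l m).
Proof. intros [H1 H2] [H3 H4]. split; apply derivable_pt_lim_plus; auto. Qed.

Lemma Cderiv_opp f x l : Cderiv_at f x l -> Cderiv_at (fun t => Copp (f t)) x (Copp l).
Proof. intros [H1 H2]. split; apply derivable_pt_lim_opp; auto. Qed.

Lemma Cderiv_sub f g x l m : Cderiv_at f x l -> Cderiv_at g x m ->
  Cderiv_at (fun t => Csub (f t) (g t)) x (Csub l m).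
Proof. intros. apply Cderiv_add; auto. apply Cderiv_opp; auto. Qed.

Lemma Cderiv_mul f g x l m : Cderiv_at f x l -> Cderiv_at g x m ->
  Cderiv_at (fun t => Cmul (f t) (g t)) x (Cadd (Cmul l (g x)) (Cmul (f x) m)).
Proof.
  intros [H1 H2] [H3 H4]. split; simpl.
  - eapply derivable_pt_lim_eq.
    + exact (derivable_pt_lim_minus _ _ _ _ _
               (derivable_pt_lim_mult _ _ _ _ _ H1 H3) (derivable_pt_lim_mult _ _ _ _ _ H2 H4)).
    + cbv beta; ring.
  - eapply derivable_pt_lim_eq.
    + exact (derivable_pt_lim_plus _ _ _ _ _
               (derivable_pt_lim_mult _ _ _ _ _ H1 H4) (derivable_pt_lim_mult _ _ _ _ _ H2 H3)).
    + cbv beta; ring.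
Qed.

Lemma Cderiv_scal c f x l : Cderiv_at f x l -> Cderiv_at (fun t => Cmul c (f t)) x (Cmul c l).
Proof.
  intros H. eapply Cderiv_eq; [apply Cderiv_mul; [apply Cderiv_const | exact H]|]. to_C. ring.
Qed.

Lemma Cderiv_sq g x g' : Cderiv_at g x g' ->
  Cderiv_at (fun t => Cmul (g t) (g t)) x (Cmul (Cmul (RtoC 2) (g x)) g').
Proof. intros H. eapply Cderiv_eq; [apply Cderiv_mul; eauto|]. to_C. ring. Qed.

Lemma Cderiv_exp g x l : Cderiv_at g x l -> Cderiv_at (fun t => Cexp (g t)) x (Cmul (Cexp (g x)) l).
Proof.
  intros [H1 H2]. unfold Cexp. split; simpl.
  - eapply derivable_pt_lim_eq.
    + exact (derivable_pt_lim_mult _ _ _ _ _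
               (derivable_pt_lim_comp _ _ _ _ _ H1 (derivable_pt_lim_exp _))
               (derivable_pt_lim_comp _ _ _ _ _ H2 (derivable_pt_lim_cos _))).
    + unfold comp; cbv beta; ring.
  - eapply derivable_pt_lim_eq.
    + exact (derivable_pt_lim_mult _ _ _ _ _
               (derivable_pt_lim_comp _ _ _ _ _ H1 (derivable_pt_lim_exp _))
               (derivable_pt_lim_comp _ _ _ _ _ H2 (derivable_pt_lim_sin _))).
    + unfold comp; cbv beta; ring.
Qed.

Lemma Cderiv_translate f x0 h l : Cderiv_at f (x0 + h) l -> Cderiv_at (fun s => f (x0 + s)) h l.
Proof.
  intros [H1 H2].
  assert (Hd : derivable_pt_lim (fun s => x0 + s) h 1).
  { eapply derivable_pt_lim_eq.
    - exact (derivable_pt_lim_plus _ _ _ _ _ (derivable_pt_lim_const x0 h) (derivable_pt_lim_id h)).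
    - ring. }
  split; eapply derivable_pt_lim_eq.
  - exact (derivable_pt_lim_comp _ (fun t => fst (f t)) _ _ _ Hd H1).
  - ring.
  - exact (derivable_pt_lim_comp _ (fun t => snd (f t)) _ _ _ Hd H2).
  - ring.
Qed.

Definition Clittle_o_deriv (f : R -> CC) (x : R) (l : CC) : Prop :=
  forall eps, 0 < eps -> exists del, 0 < del /\ forall h, h <> 0 -> Rabs h < del ->
    Cmod (Csub (Csub (f (x + h)) (f x)) (Cmul (RtoC h) l)) <= eps * Rabs h.

Lemma Cderiv_little_o f x l : Cderiv_at f x l <-> Clittle_o_deriv f x l.
Proof.
  split.
  - intros [H1 H2] eps He.
    destruct (H1 (eps / 2) ltac:(lra)) as [d1 Hd1]. destruct (H2 (eps / 2) ltac:(lra)) as [d2 Hd2].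
    exists (Rmin d1 d2). split; [apply Rmin_pos; apply cond_pos|].
    intros h Hh Hlt. eapply Rle_trans; [apply Cmod_le_abs|]. simpl.
    specialize (Hd1 h Hh (Rlt_le_trans _ _ _ Hlt (Rmin_l _ _))).
    specialize (Hd2 h Hh (Rlt_le_trans _ _ _ Hlt (Rmin_r _ _))).
    replace (fst (f (x + h)) + - fst (f x) + - (h * fst l - 0 * snd l))
      with (h * ((fst (f (x + h)) - fst (f x)) / h - fst l)) by (field; auto).
    replace (snd (f (x + h)) + - snd (f x) + - (h * snd l + 0 * fst l))
      with (h * ((snd (f (x + h)) - snd (f x)) / h - snd l)) by (field; auto).
    rewrite !Rabs_mult. pose proof (Rabs_pos h). nra.
  - intros H. split; intros eps He; destruct (H (eps / 2) ltac:(lra)) as [d [Hd Hh]];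
      exists (mkposreal d Hd); intros h Hh0 Hlt; specialize (Hh h Hh0 Hlt);
      pose proof (Rabs_pos_lt h Hh0);
      apply Rle_lt_trans with (eps / 2); try lra;
      apply (Rmult_le_reg_r (Rabs h)); auto;
      rewrite <- Rabs_mult; unfold Rdiv.
    + pose proof (Rle_trans _ _ _ (re_le_Cmod _) Hh) as K. simpl in K.
      replace (((fst (f (x + h)) - fst (f x)) * / h - fst l) * h)
        with (fst (f (x + h)) + - fst (f x) + - (h * fst l - 0 * snd l)) by (field; auto). lra.
    + pose proof (Rle_trans _ _ _ (snd_le_Cmod _) Hh) as K. simpl in K.
      replace (((snd (f (x + h)) - snd (f x)) * / h - snd l) * h)
        with (snd (f (x + h)) + - snd (f x) + - (h * snd l + 0 * fst l)) by (field; auto). lra.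
Qed.

Lemma Cderiv_increment_bound g x g' : Cderiv_at g x g' ->
  exists d, 0 < d /\ forall h, h <> 0 -> Rabs h < d ->
    Cmod (Csub (g (x + h)) (g x)) <= (Cmod g' + 1) * Rabs h.
Proof.
  intros Hg. apply Cderiv_little_o in Hg. destruct (Hg 1 Rlt_0_1) as [d [Hd H]].
  exists d. split; auto. intros h Hh Hlt. specialize (H h Hh Hlt).
  replace (Csub (g (x + h)) (g x))
    with (Cadd (Csub (Csub (g (x + h)) (g x)) (Cmul (RtoC h) g')) (Cmul (RtoC h) g')) by (to_C; ring).
  eapply Rle_trans; [to_C; apply Cmod_triangle|]. to_C. rewrite Cmod_mult, Cmod_R. nra.
Qed.

(** Writing [k = g(x+h) - g(x) = O(h)], the remainder splits into
    [F(g x + k) - F(g x) - k F' = O(k^2)] and [F' (k - h g') = o(h)]. *)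
Lemma Cderiv_comp_quadratic (F : CC -> CC) (F' : CC) (M : R) g x g' :
  0 <= M ->
  (forall k, Cmod k <= 1 ->
     Cmod (Csub (Csub (F (Cadd (g x) k)) (F (g x))) (Cmul k F')) <= M * Cmod k ^ 2) ->
  Cderiv_at g x g' -> Cderiv_at (fun t => F (g t)) x (Cmul F' g').
Proof.
  intros HM HF Hg. destruct (Cderiv_increment_bound g x g' Hg) as [d0 [Hd0 H0]].
  apply Cderiv_little_o in Hg. apply Cderiv_little_o. intros eps He.
  set (K := Cmod F'). set (G := Cmod g' + 1).
  assert (HK : 0 <= K) by apply Cmod_ge_0.
  assert (HG : 1 <= G) by (pose proof (Cmod_ge_0 g'); unfold G; lra).
  assert (HMG : 0 < 2 * (M * G ^ 2 + 1)) by (pose proof (pow2_ge_0 G); nra).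
  destruct (Hg (eps / (2 * (K + 1)))) as [d1 [Hd1 H1]]; [apply Rdiv_lt_0_compat; lra|].
  set (d2 := eps / (2 * (M * G ^ 2 + 1))).
  exists (Rmin (Rmin d0 d1) (Rmin (1 / G) d2)).
  split; [repeat apply Rmin_pos; auto; apply Rdiv_lt_0_compat; lra|].
  intros h Hh Hlt.
  pose proof (Rmin_l d0 d1); pose proof (Rmin_r d0 d1).
  pose proof (Rmin_l (1 / G) d2); pose proof (Rmin_r (1 / G) d2).
  pose proof (Rmin_l (Rmin d0 d1) (Rmin (1 / G) d2)); pose proof (Rmin_r (Rmin d0 d1) (Rmin (1 / G) d2)).
  specialize (H0 h Hh ltac:(lra)). specialize (H1 h Hh ltac:(lra)).
  assert (HA : 0 < Rabs h) by (apply Rabs_pos_lt; auto). set (A := Rabs h) in *.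
  assert (HAG : A * G < 1) by (apply (proj2 (Rlt_div_r A 1 G ltac:(lra))); lra).
  assert (HAM : A * (2 * (M * G ^ 2 + 1)) < eps) by (apply (proj2 (Rlt_div_r A eps _ HMG)); fold d2; lra).
  set (k := Csub (g (x + h)) (g x)) in *.
  replace (g (x + h)) with (Cadd (g x) k) by (unfold k; to_C; ring).
  replace (Csub (Csub (F (Cadd (g x) k)) (F (g x))) (Cmul (RtoC h) (Cmul F' g')))
    with (Cadd (Csub (Csub (F (Cadd (g x) k)) (F (g x))) (Cmul k F'))
               (Cmul F' (Csub k (Cmul (RtoC h) g')))) by (to_C; ring).
  assert (Hk2 : Cmod k ^ 2 <= (G * A) ^ 2)
    by (apply pow_incr; split; [apply Cmod_ge_0 | unfold G; lra]).
  pose proof (HF k ltac:(unfold G in *; nra)) as HFk.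
  assert (M * Cmod k ^ 2 <= eps / 2 * A) by (pose proof (pow2_ge_0 G); nra).
  assert (HKe : K * (eps / (2 * (K + 1))) <= eps / 2).
  { replace (K * (eps / (2 * (K + 1)))) with (eps / 2 * (K / (K + 1))) by (field; lra).
    assert (K / (K + 1) <= 1) by (apply Rle_div_l; lra). nra. }
  assert (K * Cmod (Csub k (Cmul (RtoC h) g')) <= eps / 2 * A).
  { unfold k. apply Rle_trans with (K * (eps / (2 * (K + 1)) * A)); [apply Rmult_le_compat_l; auto|].
    nra. }
  eapply Rle_trans; [to_C; apply Cmod_triangle|]. to_C. rewrite Cmod_mult. fold K. to_C. lra.
Qed.

Lemma psum_chain a g x g' : entire a -> Cderiv_at g x g' ->
  Cderiv_at (fun t => psum a (g t)) x (Cmul (psum (pderiv a) (g x)) g').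
Proof.
  intros Ha Hg. apply (Cderiv_comp_quadratic (psum a) _ (Series (fun n => Cmod (a n) * (4 * (Cmod (g x) + 1)) ^ n))); auto.
  - apply Rle_trans with (sum_f_R0 (fun n => Cmod (a n) * (4 * (Cmod (g x) + 1)) ^ n) 0).
    + simpl. rewrite Rmult_1_r. apply Cmod_ge_0.
    + pose proof (Cmod_ge_0 (g x)).
      apply partial_sum_le_Series; [|apply Ha; lra].
      intros n. apply Rmult_le_pos; [apply Cmod_ge_0 | apply pow_le; lra].
  - intros k Hk. rewrite Rmult_comm. apply psum_increment; auto.
Qed.

Lemma Cderiv_zero_const (F : R -> CC) : (forall t, Cderiv_at F t C0) -> forall s, F s = F 0.
Proof.
  intros HF s.
  assert (Hcomp : forall f : R -> R, (forall t, derivable_pt_lim f t 0) -> f s = f 0).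
  { intros f Hf. destruct (Rtotal_order s 0) as [Hs|[Hs|Hs]]; [| subst; reflexivity |].
    - destruct (MVT_cor2 f (fun _ => 0) s 0 Hs) as [c [Hc _]]; [intros; auto|]. lra.
    - destruct (MVT_cor2 f (fun _ => 0) 0 s Hs) as [c [Hc _]]; [intros; auto|]. lra. }
  apply injective_projections.
  - apply (Hcomp (fun t => fst (F t))). intros t. apply (HF t).
  - apply (Hcomp (fun t => snd (F t))). intros t. apply (HF t).
Qed.

Lemma Cexp_pair_mul a b c d : Cmul (Cexp (a, b)) (Cexp (c, d)) = Cexp (a + c, b + d).
Proof. unfold Cexp, Cmul; simpl. rewrite exp_plus, cos_plus, sin_plus. f_equal; ring. Qed.

Lemma Cexp_nz z : Cexp z <> C0.
Proof.
  unfold Cexp, C0. intros H. injection H as H1 H2.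
  pose proof (exp_pos (fst z)). pose proof (sin2_cos2 (snd z)). unfold Rsqr in *.
  assert (cos (snd z) = 0) by (apply (Rmult_eq_reg_l (exp (fst z))); lra).
  assert (sin (snd z) = 0) by (apply (Rmult_eq_reg_l (exp (fst z))); lra).
  nra.
Qed.

Lemma RtoC_Cexp r : 0 < r -> RtoC r = Cexp (ln r, 0).
Proof. intros Hr. unfold Cexp, RtoC; simpl. rewrite exp_ln, cos_0, sin_0 by auto. f_equal; ring. Qed.

Lemma Cnorm_pos z : z <> C0 -> 0 < Cnorm z.
Proof.
  intros Hz. unfold Cnorm. apply sqrt_lt_R0. destruct z as [x y]; simpl.
  destruct (Req_dec x 0); destruct (Req_dec y 0); [subst; exfalso; apply Hz; reflexivity| | |];
  pose proof (pow2_ge_0 x); pose proof (pow2_ge_0 y).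
  - assert (0 < y ^ 2) by (apply pow2_gt_0; auto); lra.
  - assert (0 < x ^ 2) by (apply pow2_gt_0; auto); lra.
  - assert (0 < x ^ 2) by (apply pow2_gt_0; auto); lra.
Qed.

Lemma Arg_polar z : z <> C0 -> Cnorm z * cos (Arg z) = fst z /\ Cnorm z * sin (Arg z) = snd z.
Proof.
  intros Hz. pose proof (Cnorm_pos z Hz) as Hrp.
  destruct z as [x y]. unfold Arg, Cnorm in *; cbn [fst snd] in *.
  set (r := sqrt (x ^ 2 + y ^ 2)) in *.
  assert (Hr2 : r * r = x ^ 2 + y ^ 2) by (apply sqrt_sqrt; nra).
  assert (Hsq : x <> 0 -> sqrt (1 + (y / x)²) = r / Rabs x).
  { intros Hx. pose proof (Rabs_pos_lt x Hx).
    rewrite <- (sqrt_Rsqr (r / Rabs x)) by (apply Rlt_le, Rdiv_lt_0_compat; auto).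
    f_equal. unfold Rsqr. replace (r / Rabs x * (r / Rabs x)) with ((r * r) / (Rabs x * Rabs x))
      by (field; lra).
    rewrite Hr2, <- Rabs_mult, Rabs_pos_eq by nra. field. auto. }
  destruct (Rlt_dec 0 x) as [Hx|Hx].
  - specialize (Hsq ltac:(lra)). rewrite Rabs_pos_eq in Hsq by lra.
    rewrite cos_atan, sin_atan, Hsq. split; field; lra.
  - destruct (Rlt_dec x 0) as [Hx'|Hx'].
    + specialize (Hsq ltac:(lra)). rewrite Rabs_left in Hsq by lra.
      destruct (Rle_dec 0 y).
      * rewrite cos_plus, sin_plus, cos_PI, sin_PI, cos_atan, sin_atan, Hsq.
        split; field; lra.
      * rewrite cos_minus, sin_minus, cos_PI, sin_PI, cos_atan, sin_atan, Hsq.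
        split; field; lra.
    + assert (x = 0) by lra. subst x.
      assert (Hr : r = Rabs y).
      { unfold r. replace (0 ^ 2 + y ^ 2) with (Rsqr (Rabs y)) by (unfold Rsqr; rewrite <- Rabs_mult,
          Rabs_pos_eq by nra; ring). apply sqrt_Rsqr, Rabs_pos. }
      destruct (Rlt_dec 0 y).
      * rewrite cos_PI2, sin_PI2, Hr, Rabs_pos_eq by lra. split; ring.
      * destruct (Rlt_dec y 0).
        -- rewrite cos_neg, sin_neg, cos_PI2, sin_PI2, Hr, Rabs_left by lra. split; ring.
        -- exfalso. assert (y = 0) by lra. subst. apply Hz. reflexivity.
Qed.

Lemma Cexp_Clog z : z <> C0 -> Cexp (Clog z) = z.
Proof.
  intros Hz. destruct (Arg_polar z Hz) as [Hc Hs].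
  unfold Cexp, Clog; simpl. rewrite exp_ln by (apply Cnorm_pos; auto).
  rewrite Hc, Hs. destruct z; reflexivity.
Qed.

Lemma Cpow_real z mu : Cpow z (RtoC mu) = Cexp (mu * ln (Cnorm z), mu * Arg z).
Proof. unfold Cpow, Clog, Cmul, RtoC; simpl. f_equal. f_equal; ring. Qed.

Lemma Cmul_RtoC_pair r z : Cmul (RtoC r) z = (r * fst z, r * snd z).
Proof. unfold Cmul, RtoC; simpl. f_equal; ring. Qed.

Lemma Cnorm_scal r z : 0 < r -> Cnorm (Cmul (RtoC r) z) = r * Cnorm z.
Proof.
  intros Hr. rewrite Cmul_RtoC_pair. unfold Cnorm; cbn [fst snd].
  replace ((r * fst z) ^ 2 + (r * snd z) ^ 2) with (r ^ 2 * (fst z ^ 2 + snd z ^ 2)) by ring.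
  rewrite sqrt_mult_alt by apply pow2_ge_0. rewrite <- Rsqr_pow2, sqrt_Rsqr; lra.
Qed.

Lemma Arg_scal r z : 0 < r -> Arg (Cmul (RtoC r) z) = Arg z.
Proof.
  intros Hr. rewrite Cmul_RtoC_pair. destruct z as [x y]. unfold Arg; simpl.
  replace (r * y / (r * x)) with (y / x) by (destruct (Req_dec x 0); [subst; unfold Rdiv;
    rewrite Rmult_0_r, !Rinv_0; ring | field; lra]).
  destruct (Rlt_dec 0 (r * x)); destruct (Rlt_dec 0 x); try (exfalso; nra); auto.
  destruct (Rlt_dec (r * x) 0); destruct (Rlt_dec x 0); try (exfalso; nra).
  - destruct (Rle_dec 0 (r * y)); destruct (Rle_dec 0 y); auto; exfalso; nra.
  - destruct (Rlt_dec 0 (r * y)); destruct (Rlt_dec 0 y); try (exfalso; nra); auto.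
    destruct (Rlt_dec (r * y) 0); destruct (Rlt_dec y 0); try (exfalso; nra); auto.
Qed.

(** The two power identities behind the change of variables: for [S <> 0] and
    [c = (S/4)^(1/4)] we have [c^4 = S/4] and [c^2 S^(-3/2) S = 1/2]. *)
Lemma quarter_root_identities (S : CC) : S <> C0 ->
  let c := Cpow (Cmul (RtoC (1/4)) S) (RtoC (1/4)) in
  Cmul (Cmul c c) (Cmul c c) = Cmul (RtoC (1/4)) S /\
  Cmul (Cmul (Cmul c c) (Cpow S (RtoC (-3/2)))) S = RtoC (1/2).
Proof.
  intros HS c. unfold c. pose proof (Cnorm_pos S HS) as Hn.
  rewrite !Cpow_real, Cnorm_scal, Arg_scal, ln_mult by lra.
  pose proof (Cexp_Clog S HS) as HP. unfold Clog in HP.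
  set (L := ln (Cnorm S)) in *. set (th := Arg S) in *. clearbody L th.
  rewrite <- HP, (RtoC_Cexp (1/4)), (RtoC_Cexp (1/2)) by lra. rewrite !Cexp_pair_mul. split.
  - f_equal. f_equal; field.
  - f_equal. f_equal; [|field].
    replace (1/4) with ((1/2) * (1/2)) by field. rewrite ln_mult by lra. field.
Qed.

Definition kummer_coef (p q : CC) (k : nat) : CC :=
  Cdiv (poch p k) (Cmul (RtoC (INR (Factorial.fact k))) (poch q k)).

Fixpoint pochR (q : R) (k : nat) : R :=
  match k with O => 1 | S j => pochR q j * (q + INR j) end.

Lemma poch_RtoC q k : poch (RtoC q) k = RtoC (pochR q k).
Proof. induction k; simpl; auto. rewrite IHk. unfold Cmul, Cadd, RtoC; simpl. f_equal; ring. Qed.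

Lemma pochR_pos q k : 0 < q -> 0 < pochR q k.
Proof. intros Hq. induction k; simpl. lra. pose proof (pos_INR k). nra. Qed.

Lemma INR_fact_pos k : 0 < INR (Factorial.fact k).
Proof. apply lt_0_INR, Factorial.lt_O_fact. Qed.

Lemma Cmod_poch_bound p q k : 1/2 <= q -> Cmod (poch p k) <= (2 * Cmod p + 1) ^ k * pochR q k.
Proof.
  intros Hq. induction k as [|k IH]; simpl.
  - to_C. rewrite Cmod_1. lra.
  - to_C. rewrite Cmod_mult. pose proof (Cmod_ge_0 (poch p k)).
    assert (Cmod (p + Complex.RtoC (INR k))%C <= Cmod p + INR k).
    { eapply Rle_trans; [apply Cmod_triangle|]. rewrite Cmod_R, Rabs_pos_eq by apply pos_INR. lra. }
    pose proof (Cmod_ge_0 (p + Complex.RtoC (INR k))%C). pose proof (Cmod_ge_0 p). pose proof (pos_INR k).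
    assert (Cmod p + INR k <= (2 * Cmod p + 1) * (q + INR k)) by nra.
    pose proof (pochR_pos q k ltac:(lra)).
    assert (0 <= (2 * Cmod p + 1) ^ k) by (apply pow_le; lra).
    apply Rle_trans with (((2 * Cmod p + 1) ^ k * pochR q k) * (Cmod p + INR k));
      [apply Rmult_le_compat; auto|].
    replace ((2 * Cmod p + 1) * (2 * Cmod p + 1) ^ k * (pochR q k * (q + INR k))) with
      (((2 * Cmod p + 1) ^ k * pochR q k) * ((2 * Cmod p + 1) * (q + INR k))) by ring.
    apply Rmult_le_compat_l; auto. apply Rmult_le_pos; lra.
Qed.

Lemma ex_series_exp x : ex_series (fun k => x ^ k / INR (Factorial.fact k)).
Proof.
  destruct (exist_exp x) as [l Hl]. exists l. apply is_series_Reals.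
  intros e He. destruct (Hl e He) as [N HN]. exists N. intros n Hn.
  erewrite sum_eq; [exact (HN n Hn)|]. intros i _. simpl. unfold Rdiv. ring.
Qed.

Lemma Cmod_kummer_coef p q k : 0 < q ->
  Cmod (kummer_coef p (RtoC q) k) = Cmod (poch p k) / (INR (Factorial.fact k) * pochR q k).
Proof.
  intros Hq. unfold kummer_coef. rewrite poch_RtoC.
  pose proof (INR_fact_pos k). pose proof (pochR_pos q k Hq).
  replace (Cdiv (poch p k) (Cmul (RtoC (INR (Factorial.fact k))) (RtoC (pochR q k))))
    with (Cmul (poch p k) (RtoC (/ (INR (Factorial.fact k) * pochR q k)))).
  - to_C. rewrite Cmod_mult, Cmod_R, Rabs_pos_eq; [unfold Rdiv; ring|].
    apply Rlt_le, Rinv_0_lt_compat. nra.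
  - to_C. rewrite RtoC_inv, RtoC_mult by nra. field. split; apply RtoC_neq0; lra.
Qed.

(** Kummer's series is entire for [q >= 1/2]: its coefficients are dominated by
    [(2|p|+1)^k / k!]. *)
Lemma entire_kummer p q : 1/2 <= q -> entire (kummer_coef p (RtoC q)).
Proof.
  intros Hq rho Hr. set (A := 2 * Cmod p + 1).
  apply (ex_series_nonneg_le _ (fun k => (A * rho) ^ k / INR (Factorial.fact k))); [|apply ex_series_exp].
  intros k. rewrite Cmod_kummer_coef by lra.
  pose proof (INR_fact_pos k). pose proof (pochR_pos q k ltac:(lra)).
  pose proof (Cmod_poch_bound p q k Hq). pose proof (Cmod_ge_0 (poch p k)). pose proof (pow_le rho k Hr).
  split; [apply Rmult_le_pos; auto; apply Rdiv_le_0_compat; auto; nra|].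
  rewrite Rpow_mult_distr. unfold Rdiv.
  replace (Cmod (poch p k) * / (INR (Factorial.fact k) * pochR q k) * rho ^ k) with
    ((Cmod (poch p k) / pochR q k) * rho ^ k * / INR (Factorial.fact k)) by (field; lra).
  apply Rmult_le_compat_r; [apply Rlt_le, Rinv_0_lt_compat; auto|].
  apply Rmult_le_compat_r; auto.
  apply (Rmult_le_reg_r (pochR q k)); auto. unfold Rdiv. rewrite Rmult_assoc, Rinv_l by lra. unfold A. lra.
Qed.

Lemma Phi_psum p q z : 1/2 <= q -> Phi p (RtoC q) z = psum (kummer_coef p (RtoC q)) z.
Proof.
  intros Hq. unfold Phi. symmetry. apply psum_unique; [apply entire_kummer; auto|].
  apply epsilon_spec. exists (psum (kummer_coef p (RtoC q)) z). apply psum_cv, entire_kummer; auto.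
Qed.

Lemma kummer_coef_0 p q : kummer_coef p (RtoC q) 0 = C1.
Proof. unfold kummer_coef. simpl. to_C. field. Qed.

Lemma kummer_coef_rec p q k : 0 < q ->
  Cmul (kummer_coef p (RtoC q) (S k)) (Cmul (RtoC (INR (S k))) (Cadd (RtoC q) (RtoC (INR k)))) =
  Cmul (kummer_coef p (RtoC q) k) (Cadd p (RtoC (INR k))).
Proof.
  intros Hq. unfold kummer_coef. rewrite !poch_RtoC. simpl poch.
  change (Factorial.fact (S k)) with (S k * Factorial.fact k)%nat. rewrite mult_INR. simpl pochR.
  pose proof (INR_fact_pos k). pose proof (pochR_pos q k Hq). pose proof (pos_INR k).
  assert (0 < INR (S k)) by (rewrite S_INR; lra).
  to_C. rewrite !RtoC_mult, <- RtoC_plus. field. repeat split; apply RtoC_neq0; lra.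
Qed.

(** Kummer's equation [z Phi'' + (q - z) Phi' - p Phi = 0]: the coefficients
    of the left-hand side vanish by the recurrence. *)
Lemma kummer_equation p q z : 1/2 <= q ->
  let a := kummer_coef p (RtoC q) in
  Cadd (Cmul z (psum (pderiv (pderiv a)) z))
       (Csub (Cmul (Csub (RtoC q) z) (psum (pderiv a) z)) (Cmul p (psum a z))) = C0.
Proof.
  intros Hq a.
  assert (Ea : entire a) by (apply entire_kummer; auto).
  set (c := fun n => Cadd (pshift (pderiv (pderiv a)) n) (Cadd (Cmul (RtoC q) (pderiv a n))
                      (Cadd (Cmul (RtoC (-1)) (pshift (pderiv a) n)) (Cmul (Copp p) (a n))))).
  assert (Hc : psum c z = Cadd (Cmul z (psum (pderiv (pderiv a)) z))
       (Csub (Cmul (Csub (RtoC q) z) (psum (pderiv a) z)) (Cmul p (psum a z)))).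
  { unfold c. rewrite !psum_add, !psum_scal, !psum_pshift by auto 10 with entire. to_C. ring. }
  rewrite <- Hc, (psum_ext c (fun _ => C0)); [apply psum_zero|].
  intros n. pose proof (kummer_coef_rec p q n ltac:(lra)) as Hrec. fold a in Hrec.
  unfold c. destruct n as [|m]; cbn [pshift]; unfold pderiv.
  - transitivity (Csub (Cmul (a 1%nat) (Cmul (RtoC (INR 1)) (Cadd (RtoC q) (RtoC (INR 0)))))
                       (Cmul (a 0%nat) (Cadd p (RtoC (INR 0))))).
    + simpl INR. to_C. ring.
    + rewrite Hrec. to_C. ring.
  - transitivity (Csub (Cmul (a (S (S m))) (Cmul (RtoC (INR (S (S m)))) (Cadd (RtoC q) (RtoC (INR (S m))))))
                       (Cmul (a (S m)) (Cadd p (RtoC (INR (S m)))))).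
    + to_C. ring.
    + rewrite Hrec. to_C. ring.
Qed.

(** Weber's equation [w'' = (z^2 - la) w], stated along differentiable curves:
    [w] has complex derivative [wd], and [wd] has derivative [(z^2 - la) w]. *)
Definition weber_pair (la : CC) (w wd : CC -> CC) : Prop :=
  forall g x g', Cderiv_at g x g' ->
    Cderiv_at (fun t => w (g t)) x (Cmul g' (wd (g x))) /\
    Cderiv_at (fun t => wd (g t)) x (Cmul g' (Cmul (Csub (Cmul (g x) (g x)) la) (w (g x)))).

(** Abel's identity: the equation has no first-order term, so the Wronskian of
    two solutions is constant. *)
Lemma weber_wronskian_const la w1 wd1 w2 wd2 :
  weber_pair la w1 wd1 -> weber_pair la w2 wd2 -> forall z0,
  Csub (Cmul (w1 z0) (wd2 z0)) (Cmul (wd1 z0) (w2 z0)) =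
  Csub (Cmul (w1 C0) (wd2 C0)) (Cmul (wd1 C0) (w2 C0)).
Proof.
  intros H1 H2 z0. set (g := fun t => Cmul (RtoC t) z0).
  assert (Hg : forall t, Cderiv_at g t z0).
  { intros t. eapply Cderiv_eq; [apply (Cderiv_mul (fun t => RtoC t) (fun _ => z0));
      [apply Cderiv_id | apply Cderiv_const]|]. to_C. ring. }
  pose proof (Cderiv_zero_const
    (fun t => Csub (Cmul (w1 (g t)) (wd2 (g t))) (Cmul (wd1 (g t)) (w2 (g t))))) as Hc.
  replace z0 with (g 1) by (unfold g; to_C; ring).
  replace C0 with (g 0) by (unfold g; to_C; ring).
  apply Hc. intros t.
  destruct (H1 g t z0 (Hg t)) as [D1 Dd1]. destruct (H2 g t z0 (Hg t)) as [D2 Dd2].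
  eapply Cderiv_eq; [apply Cderiv_sub; apply Cderiv_mul; eauto|]. to_C. ring.
Qed.

Definition gauss (z : CC) : CC := Cexp (Copp (Cdiv (Cmul z z) (RtoC 2))).
Definition psum_sq (a : nat -> CC) (z : CC) : CC := psum a (Cmul z z).

Lemma gauss_deriv g x g' : Cderiv_at g x g' ->
  Cderiv_at (fun t => gauss (g t)) x (Cmul (gauss (g x)) (Copp (Cmul (g x) g'))).
Proof.
  intros H. unfold gauss. eapply Cderiv_eq.
  - apply Cderiv_exp, Cderiv_opp. eapply Cderiv_eq; [apply Cderiv_mul; [apply Cderiv_sq; eauto | apply Cderiv_const]|].
    reflexivity.
  - f_equal. to_C. field.
Qed.

Lemma psum_sq_deriv a g x g' : entire a -> Cderiv_at g x g' ->
  Cderiv_at (fun t => psum_sq a (g t)) x (Cmul (Cmul (Cmul (RtoC 2) (g x)) g') (psum_sq (pderiv a) (g x))).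
Proof.
  intros Ha H. unfold psum_sq. eapply Cderiv_eq; [apply psum_chain; auto; apply Cderiv_sq; eauto|].
  to_C. ring.
Qed.

Lemma gauss_0 : gauss C0 = C1.
Proof.
  unfold gauss. replace (Copp (Cdiv (Cmul C0 C0) (RtoC 2))) with C0 by (to_C; field).
  unfold Cexp, C0, C1; simpl. rewrite exp_0, cos_0, sin_0. f_equal; ring.
Qed.

Lemma psum_sq_0 a : entire a -> psum_sq a C0 = a O.
Proof. intros Ha. unfold psum_sq. replace (Cmul C0 C0) with C0 by (to_C; ring). apply psum_at0; auto. Qed.

Definition even_sol a z := Cmul (gauss z) (psum_sq a z).
Definition even_sol' a z :=
  Cmul (gauss z) (Csub (Cmul (Cmul (RtoC 2) z) (psum_sq (pderiv a) z)) (Cmul z (psum_sq a z))).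
Definition even_sol'' a z := Cmul (gauss z) (Cadd (Cmul (Csub (Cmul z z) (RtoC 1)) (psum_sq a z))
   (Cadd (Cmul (Csub (RtoC 2) (Cmul (RtoC 4) (Cmul z z))) (psum_sq (pderiv a) z))
         (Cmul (Cmul (RtoC 4) (Cmul z z)) (psum_sq (pderiv (pderiv a)) z)))).
Definition odd_sol a z := Cmul (gauss z) (Cmul z (psum_sq a z)).
Definition odd_sol' a z := Cmul (gauss z) (Cadd (Cmul (Csub (RtoC 1) (Cmul z z)) (psum_sq a z))
   (Cmul (Cmul (RtoC 2) (Cmul z z)) (psum_sq (pderiv a) z))).
Definition odd_sol'' a z := Cmul (Cmul (gauss z) z) (Cadd (Cmul (Csub (Cmul z z) (RtoC 3)) (psum_sq a z))
   (Cadd (Cmul (Csub (RtoC 6) (Cmul (RtoC 4) (Cmul z z))) (psum_sq (pderiv a) z))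
         (Cmul (Cmul (RtoC 4) (Cmul z z)) (psum_sq (pderiv (pderiv a)) z)))).

Ltac differentiate := repeat first
  [ apply Cderiv_mul | apply Cderiv_add | apply Cderiv_sub | apply Cderiv_opp
  | apply Cderiv_const | apply gauss_deriv | apply psum_sq_deriv | apply Cderiv_sq
  | eassumption | apply entire_pderiv ].

Section CandidateDerivatives.
Variables (a : nat -> CC) (g : R -> CC) (x : R) (g' : CC).
Hypotheses (Ha : entire a) (Hg : Cderiv_at g x g').

Lemma even_sol_deriv : Cderiv_at (fun t => even_sol a (g t)) x (Cmul g' (even_sol' a (g x))).
Proof. unfold even_sol, even_sol'. eapply Cderiv_eq; [differentiate|]. to_C. ring. Qed.

Lemma even_sol'_deriv : Cderiv_at (fun t => even_sol' a (g t)) x (Cmul g' (even_sol'' a (g x))).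
Proof. unfold even_sol', even_sol''. eapply Cderiv_eq; [differentiate|]. to_C. ring. Qed.

Lemma odd_sol_deriv : Cderiv_at (fun t => odd_sol a (g t)) x (Cmul g' (odd_sol' a (g x))).
Proof. unfold odd_sol, odd_sol'. eapply Cderiv_eq; [differentiate|]. to_C. ring. Qed.

Lemma odd_sol'_deriv : Cderiv_at (fun t => odd_sol' a (g t)) x (Cmul g' (odd_sol'' a (g x))).
Proof. unfold odd_sol', odd_sol''. eapply Cderiv_eq; [differentiate|]. to_C. ring. Qed.

End CandidateDerivatives.

Definition even_coef (la : CC) := kummer_coef (Cdiv (Csub (RtoC 1) la) (RtoC 4)) (RtoC (1/2)).
Definition odd_coef (la : CC) := kummer_coef (Cdiv (Csub (RtoC 3) la) (RtoC 4)) (RtoC (3/2)).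

Lemma w1_even_sol la z : w1 la z = even_sol (even_coef la) z.
Proof. unfold w1, even_sol, gauss, psum_sq, even_coef. rewrite Phi_psum by lra. reflexivity. Qed.

Lemma w2_odd_sol la z : w2 la z = odd_sol (odd_coef la) z.
Proof. unfold w2, odd_sol, gauss, psum_sq, odd_coef. rewrite Phi_psum by lra. reflexivity. Qed.

Lemma RtoC_div a b : b <> 0 -> RtoC (a / b) = Cdiv (RtoC a) (RtoC b).
Proof. intros Hb. unfold Cdiv, Cmul, Cinv, RtoC; simpl. f_equal; field; auto. Qed.

(** Kummer's equation at [Z = z^2] turns into Weber's equation. *)
Lemma even_sol_weber la z :
  even_sol'' (even_coef la) z = Cmul (Csub (Cmul z z) la) (even_sol (even_coef la) z).
Proof.
  pose proof (kummer_equation (Cdiv (Csub (RtoC 1) la) (RtoC 4)) (1/2) (Cmul z z) ltac:(lra)) as K.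
  cbv zeta in K. fold (even_coef la) in K.
  unfold even_sol'', even_sol, psum_sq. set (Z := Cmul z z) in *. set (a := even_coef la) in *.
  set (Kx := Cadd (Cmul Z (psum (pderiv (pderiv a)) Z))
       (Csub (Cmul (Csub (RtoC (1/2)) Z) (psum (pderiv a) Z))
             (Cmul (Cdiv (Csub (RtoC 1) la) (RtoC 4)) (psum a Z)))) in K.
  transitivity (Cadd (Cmul (Csub Z la) (Cmul (gauss z) (psum a Z))) (Cmul (Cmul (RtoC 4) (gauss z)) Kx)).
  - unfold Kx. rewrite RtoC_div by lra. to_C. field.
  - rewrite K. to_C. ring.
Qed.

Lemma odd_sol_weber la z :
  odd_sol'' (odd_coef la) z = Cmul (Csub (Cmul z z) la) (odd_sol (odd_coef la) z).
Proof.
  pose proof (kummer_equation (Cdiv (Csub (RtoC 3) la) (RtoC 4)) (3/2) (Cmul z z) ltac:(lra)) as K.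
  cbv zeta in K. fold (odd_coef la) in K.
  unfold odd_sol'', odd_sol, psum_sq. set (Z := Cmul z z) in *. set (a := odd_coef la) in *.
  set (Kx := Cadd (Cmul Z (psum (pderiv (pderiv a)) Z))
       (Csub (Cmul (Csub (RtoC (3/2)) Z) (psum (pderiv a) Z))
             (Cmul (Cdiv (Csub (RtoC 3) la) (RtoC 4)) (psum a Z)))) in K.
  transitivity (Cadd (Cmul (Csub Z la) (Cmul (gauss z) (Cmul z (psum a Z))))
                     (Cmul (Cmul (Cmul (RtoC 4) (gauss z)) z) Kx)).
  - unfold Kx, Z. rewrite RtoC_div by lra. to_C. field.
  - rewrite K. to_C. ring.
Qed.

Lemma weber_pair_w1 la : weber_pair la (w1 la) (even_sol' (even_coef la)).
Proof.
  intros g x g' Hg. assert (Ha : entire (even_coef la)) by (apply entire_kummer; lra).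
  split.
  - eapply Cderiv_ext; [intros t; symmetry; apply w1_even_sol|].
    apply even_sol_deriv; auto.
  - rewrite w1_even_sol, <- even_sol_weber. apply even_sol'_deriv; auto.
Qed.

Lemma weber_pair_w2 la : weber_pair la (w2 la) (odd_sol' (odd_coef la)).
Proof.
  intros g x g' Hg. assert (Ha : entire (odd_coef la)) by (apply entire_kummer; lra).
  split.
  - eapply Cderiv_ext; [intros t; symmetry; apply w2_odd_sol|].
    apply odd_sol_deriv; auto.
  - rewrite w2_odd_sol, <- odd_sol_weber. apply odd_sol'_deriv; auto.
Qed.

(** Their Wronskian is identically [1] (its value at [z = 0]). *)
Lemma wronskian_w1_w2 la z :
  Csub (Cmul (w1 la z) (odd_sol' (odd_coef la) z)) (Cmul (even_sol' (even_coef la) z) (w2 la z)) = C1.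
Proof.
  rewrite (weber_wronskian_const la _ _ _ _ (weber_pair_w1 la) (weber_pair_w2 la) z).
  rewrite w1_even_sol, w2_odd_sol. unfold even_sol, even_sol', odd_sol, odd_sol'.
  rewrite gauss_0, !psum_sq_0 by (apply entire_kummer; lra).
  unfold even_coef, odd_coef. rewrite !kummer_coef_0. to_C. ring.
Qed.

Definition zscale (b20 b11 b02 : CC) : CC :=
  Cpow (Copp (Cdiv (Delta2 b20 b11 b02) (Cmul (RtoC 4) (Cmul b20 b20)))) (RtoC (1/4)).

Section Prefactor.
Variables b20 b11 b10 : CC.

Definition prefac_logderiv (x : R) : CC :=
  Copp (Cmul (Cdiv Ci (Cmul (RtoC 4) b20)) (Cadd (Cmul b11 (RtoC (2 * x))) (Cmul (RtoC 2) b10))).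
Definition prefac_logderiv' : CC :=
  Copp (Cmul (Cdiv Ci (Cmul (RtoC 4) b20)) (Cmul b11 (RtoC 2))).

Lemma prefac_deriv x :
  Cderiv_at (prefac b20 b11 b10) x (Cmul (prefac b20 b11 b10 x) (prefac_logderiv x)).
Proof.
  unfold prefac. apply Cderiv_exp. unfold prefac_logderiv.
  assert (HX2 : derivable_pt_lim (fun t => t ^ 2) x (2 * x))
    by (eapply derivable_pt_lim_eq; [apply derivable_pt_lim_pow | simpl; ring]).
  apply Cderiv_opp. eapply Cderiv_eq.
  - apply Cderiv_scal, Cderiv_add.
    + apply Cderiv_scal, (Cderiv_RtoC (fun t => t ^ 2)), HX2.
    + apply Cderiv_scal, Cderiv_scal, Cderiv_id.
  - to_C. ring.
Qed.

Lemma prefac_logderiv_deriv x : Cderiv_at prefac_logderiv x prefac_logderiv'.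
Proof.
  unfold prefac_logderiv, prefac_logderiv'. apply Cderiv_opp. eapply Cderiv_eq.
  - apply Cderiv_scal, Cderiv_add; [|apply Cderiv_const].
    apply Cderiv_scal, (Cderiv_RtoC (fun t => 2 * t) x 2).
    eapply derivable_pt_lim_eq; [apply (derivable_pt_lim_scal (fun t => t) 2 x 1), derivable_pt_lim_id | ring].
  - to_C. ring.
Qed.

End Prefactor.

Lemma zarg_deriv b20 b11 b02 b10 b01 x : Cderiv_at (zarg b20 b11 b02 b10 b01) x (zscale b20 b11 b02).
Proof.
  unfold zarg, zscale. cbv zeta. eapply Cderiv_eq.
  - apply Cderiv_scal, Cderiv_add; [apply Cderiv_id | apply Cderiv_const].
  - to_C. ring.
Qed.

Lemma Ci_sq : Cadd (Cmul Ci Ci) C1 = C0.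
Proof. unfold Cadd, Cmul, Ci, C1, C0; simpl. f_equal; ring. Qed.

Section ChangeOfVariables.
Variables b20 b11 b02 b10 b01 b00 : CC.
Hypothesis Hb20 : b20 <> C0.
Hypothesis HD2 : Delta2 b20 b11 b02 <> C0.

Lemma neg_Delta2_ratio_nz : Copp (Cdiv (Delta2 b20 b11 b02) (Cmul b20 b20)) <> C0.
Proof.
  intros E. apply HD2. set (D := Delta2 b20 b11 b02) in *.
  replace D with (Copp (Cmul (Copp (Cdiv D (Cmul b20 b20))) (Cmul b20 b20))).
  - rewrite E. to_C. ring.
  - to_C. field. auto.
Qed.

(** Completing the square: with [X + Delta1/(2 Delta2)] substituted, the
    potential [c^2 (z^2 - la)] of Weber's equation becomes the quadratic
    [-Delta2/(4 b20^2) (X + d)^2 + (Delta1^2 - 4 Delta2 Delta0)/(16 Delta2 b20^2)]. *)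
Lemma weber_potential X :
  let D2 := Delta2 b20 b11 b02 in let D1 := Delta1 b20 b11 b10 b01 in
  let D0 := Delta0 b20 b11 b10 b00 in
  let c := zscale b20 b11 b02 in let d := Cdiv D1 (Cmul (RtoC 2) D2) in
  Cmul (Cmul c c) (Csub (Cmul (Cmul c (Cadd X d)) (Cmul c (Cadd X d))) (lam b20 b11 b02 b10 b01 b00)) =
  Cadd (Cmul (Copp (Cdiv D2 (Cmul (RtoC 4) (Cmul b20 b20)))) (Cmul (Cadd X d) (Cadd X d)))
       (Cdiv (Csub (Cmul D1 D1) (Cmul (RtoC 4) (Cmul D2 D0))) (Cmul (RtoC 16) (Cmul D2 (Cmul b20 b20)))).
Proof.
  intros D2 D1 D0 c d.
  pose proof neg_Delta2_ratio_nz as HS. fold D2 in HS.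
  set (S := Copp (Cdiv D2 (Cmul b20 b20))) in *.
  assert (S4 : Copp (Cdiv D2 (Cmul (RtoC 4) (Cmul b20 b20))) = Cmul (RtoC (1/4)) S).
  { unfold S. rewrite RtoC_div by lra. to_C. field. repeat split; auto; apply RtoC_neq0; lra. }
  unfold c, zscale. fold D2. rewrite S4. destruct (quarter_root_identities S HS) as [K4 K2].
  set (C := Cpow (Cmul (RtoC (1/4)) S) (RtoC (1/4))) in *.
  set (P := Cpow S (RtoC (-3/2))) in *.
  unfold lam. fold D2 D1 D0. fold S P.
  transitivity (Cadd (Cmul (Cmul (Cmul C C) (Cmul C C)) (Cmul (Cadd X d) (Cadd X d)))
     (Copp (Cmul (Cmul (Cmul (Cmul C C) P) S)
       (Cdiv (Csub (Cmul D1 D1) (Cmul (RtoC 4) (Cmul D2 D0))) (Cmul (RtoC 8) (Cmul S (Cpown b20 4))))))).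
  - rewrite RtoC_div by lra. simpl Cpown. to_C. field. repeat split; auto; apply RtoC_neq0; lra.
  - rewrite K4, K2. unfold S. rewrite !RtoC_div by lra. simpl Cpown. to_C. field.
    repeat split; auto; apply RtoC_neq0; lra.
Qed.

Lemma solves_B_of_weber w wd : weber_pair (lam b20 b11 b02 b10 b01 b00) w wd ->
  solves_B b20 b11 b02 b10 b01 b00 (fun x => Cmul (prefac b20 b11 b10 x) (w (zarg b20 b11 b02 b10 b01 x))).
Proof.
  intros Hw.
  set (c := zscale b20 b11 b02). set (z := zarg b20 b11 b02 b10 b01).
  set (P := prefac b20 b11 b10). set (f1 := prefac_logderiv b20 b11 b10). set (f2 := prefac_logderiv' b20 b11).
  set (la := lam b20 b11 b02 b10 b01 b00) in *.
  exists (fun x => Cmul (P x) (Cadd (Cmul (f1 x) (w (z x))) (Cmul c (wd (z x))))).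
  exists (fun x => Cmul (P x) (Cadd (Cmul (f1 x) (Cadd (Cmul (f1 x) (w (z x))) (Cmul c (wd (z x)))))
                     (Cadd (Cmul f2 (w (z x))) (Cadd (Cmul (f1 x) (Cmul c (wd (z x))))
                       (Cmul (Cmul c c) (Cmul (Csub (Cmul (z x) (z x)) la) (w (z x)))))))).
  intros x. pose proof (zarg_deriv b20 b11 b02 b10 b01 x) as Hz. fold c z in Hz.
  destruct (Hw z x c Hz) as [Hw1 Hw2].
  pose proof (prefac_deriv b20 b11 b10 x) as HP. fold P f1 in HP.
  pose proof (prefac_logderiv_deriv b20 b11 b10 x) as Hf. fold f1 f2 in Hf.
  split; [|split].
  - eapply Cderiv_eq; [apply Cderiv_mul; eauto|]. to_C. ring.
  - eapply Cderiv_eq; [apply Cderiv_mul; [apply HP | apply Cderiv_add;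
      [apply Cderiv_mul; eauto | apply Cderiv_scal; eauto]]|]. to_C. ring.
  - unfold B_apply. cbv beta.
    pose proof (weber_potential (RtoC x)) as HF. cbv zeta in HF. fold c la in HF.
    assert (Ez : z x = Cmul c (Cadd (RtoC x) (Cdiv (Delta1 b20 b11 b10 b01) (Cmul (RtoC 2) (Delta2 b20 b11 b02)))))
      by reflexivity.
    rewrite Ez in *. set (v := w _). set (W := wd _).
    set (ZZ := Cmul (Cmul c _) (Cmul c _)) in *.
    replace (Cmul (Cmul c c) (Cmul (Csub ZZ la) v)) with (Cmul (Cmul (Cmul c c) (Csub ZZ la)) v)
      by (to_C; ring).
    rewrite HF. clear HF. clearbody v W.
    unfold f1, f2, prefac_logderiv, prefac_logderiv', P. set (PP := prefac b20 b11 b10 x).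
    unfold Delta0, Delta1, Delta2 in *.
    (* what remains is a multiple of [i^2 + 1] *)
    transitivity (Cmul (Cadd (Cmul Ci Ci) C1)
       (Cdiv (Cmul (Cmul PP v) (Cmul (Cadd (Cmul b11 (RtoC x)) b10) (Cadd (Cmul b11 (RtoC x)) b10)))
             (Cmul (RtoC 4) b20))).
    + rewrite RtoC_mult. to_C. field. auto.
    + rewrite Ci_sq. to_C. ring.
Qed.

End ChangeOfVariables.

Lemma lin_indep2_wronskian (f1 f2 : R -> CC) x0 d1 d2 :
  Cderiv_at f1 x0 d1 -> Cderiv_at f2 x0 d2 ->
  Csub (Cmul (f1 x0) d2) (Cmul d1 (f2 x0)) <> C0 -> lin_indep2 f1 f2.
Proof.
  intros H1 H2 HW c1 c2 Hc.
  assert (Hd : Cadd (Cmul c1 d1) (Cmul c2 d2) = C0).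
  { apply (Cderiv_unique (fun x => Cadd (Cmul c1 (f1 x)) (Cmul c2 (f2 x))) x0).
    - apply Cderiv_add; apply Cderiv_scal; auto.
    - eapply Cderiv_ext; [intros t; symmetry; apply Hc | apply Cderiv_const]. }
  pose proof (Hc x0) as Hv.
  set (W := Csub (Cmul (f1 x0) d2) (Cmul d1 (f2 x0))) in *.
  split.
  - transitivity (Cdiv (Csub (Cmul d2 (Cadd (Cmul c1 (f1 x0)) (Cmul c2 (f2 x0))))
                             (Cmul (f2 x0) (Cadd (Cmul c1 d1) (Cmul c2 d2)))) W).
    + unfold W in *. to_C. field. auto.
    + rewrite Hv, Hd. unfold W in *. to_C. field. auto.
  - transitivity (Cdiv (Csub (Cmul (f1 x0) (Cadd (Cmul c1 d1) (Cmul c2 d2)))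
                             (Cmul d1 (Cadd (Cmul c1 (f1 x0)) (Cmul c2 (f2 x0))))) W).
    + unfold W in *. to_C. field. auto.
    + rewrite Hv, Hd. unfold W in *. to_C. field. auto.
Qed.

Lemma lin_indep2_scale (P f1 f2 : R -> CC) : (forall x, P x <> C0) ->
  lin_indep2 f1 f2 -> lin_indep2 (fun x => Cmul (P x) (f1 x)) (fun x => Cmul (P x) (f2 x)).
Proof.
  intros HP Hf c1 c2 Hc. apply Hf. intros x. specialize (Hc x). specialize (HP x).
  transitivity (Cdiv (Cadd (Cmul c1 (Cmul (P x) (f1 x))) (Cmul c2 (Cmul (P x) (f2 x)))) (P x)).
  - to_C. field. auto.
  - rewrite Hc. to_C. field. auto.
Qed.

Section ExplicitSolutions.
Variables b20 b11 b02 b10 b01 b00 : CC.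
Hypothesis Hb20 : b20 <> C0.
Hypothesis HD2 : Delta2 b20 b11 b02 <> C0.

Lemma u_sol1_solves : solves_B b20 b11 b02 b10 b01 b00 (u_sol1 b20 b11 b02 b10 b01 b00).
Proof. apply (solves_B_of_weber _ _ _ _ _ _ Hb20 HD2 _ _ (weber_pair_w1 _)). Qed.

Lemma u_sol2_solves : solves_B b20 b11 b02 b10 b01 b00 (u_sol2 b20 b11 b02 b10 b01 b00).
Proof. apply (solves_B_of_weber _ _ _ _ _ _ Hb20 HD2 _ _ (weber_pair_w2 _)). Qed.

End ExplicitSolutions.

(** After removing the prefactor, the Wronskian of [w_j (zarg x)] is
    [zscale * 1], which is nonzero. *)
Lemma u_sol_lin_indep b20 b11 b02 b10 b01 b00 :
  lin_indep2 (u_sol1 b20 b11 b02 b10 b01 b00) (u_sol2 b20 b11 b02 b10 b01 b00).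
Proof.
  apply lin_indep2_scale; [intros x; apply Cexp_nz|].
  set (la := lam b20 b11 b02 b10 b01 b00). set (z := zarg b20 b11 b02 b10 b01).
  set (c := zscale b20 b11 b02).
  pose proof (zarg_deriv b20 b11 b02 b10 b01 0) as Hz. fold z c in Hz.
  apply (lin_indep2_wronskian _ _ 0 _ _ (proj1 (weber_pair_w1 la z 0 c Hz))
                                      (proj1 (weber_pair_w2 la z 0 c Hz))).
  pose proof (wronskian_w1_w2 la (z 0)) as HW.
  assert (Hc : c <> C0) by apply Cexp_nz.
  intros E. apply Hc.
  transitivity (Cmul c (Csub (Cmul (w1 la (z 0)) (odd_sol' (odd_coef la) (z 0)))
                             (Cmul (even_sol' (even_coef la) (z 0)) (w2 la (z 0))))).
  - rewrite HW. to_C. ring.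
  - rewrite <- E. to_C. ring.
Qed.

Lemma recurrence_step (al0 al1 be0 be1 be2 B m t0 t1 t2 t3 t4 : R) :
  0 <= al0 -> 0 <= al1 -> 0 <= be0 -> 0 <= be1 -> 0 <= be2 -> 0 <= m ->
  0 <= t0 <= B -> 0 <= t1 <= B -> 0 <= t2 <= B -> 0 <= t3 <= B ->
  al0 + al1 + be0 + be1 + be2 <= m ->
  t4 * ((m + 1) * (m + 2)) <= al0 * (m + 1) * t3 + (al1 * m + be0) * t2 + be1 * t1 + be2 * t0 ->
  t4 <= B.
Proof.
  intros. apply (Rmult_le_reg_r ((m + 1) * (m + 2))); [nra|].
  assert (al0 * (m + 1) * t3 <= al0 * (m + 1) * B) by (apply Rmult_le_compat_l; nra).
  assert ((al1 * m + be0) * t2 <= (al1 * m + be0) * B) by (apply Rmult_le_compat_l; nra).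
  assert (be1 * t1 <= be1 * B) by (apply Rmult_le_compat_l; lra).
  assert (be2 * t0 <= be2 * B) by (apply Rmult_le_compat_l; lra).
  assert (al1 * m <= al1 * (m + 1)) by nra.
  assert ((be0 + be1 + be2) * 1 <= (be0 + be1 + be2) * (m + 1)) by nra.
  assert ((al0 + al1 + be0 + be1 + be2) * (m + 1) <= m * (m + 1)) by nra.
  nra.
Qed.

Lemma term_le_partial_sum (f : nat -> R) k N :
  (forall n, 0 <= f n) -> (k <= N)%nat -> f k <= sum_f_R0 f N.
Proof.
  intros Hf Hk. induction N.
  - replace k with 0%nat by lia. simpl. lra.
  - rewrite tech5. destruct (Nat.eq_dec k (S N)) as [->|].
    + pose proof (cond_pos_sum f N Hf). lra.
    + pose proof (Hf (S N)). assert (f k <= sum_f_R0 f N) by (apply IHN; lia). lra.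
Qed.

Section PowerSeriesSolution.
Variables a0 a1 c0 c1 c2 y0 y1 : CC.

(** The recurrence [(m+1)(m+2) y_(m+2) = a0 (m+1) y_(m+1) + (a1 m + c0) y_m
    + c1 y_(m-1) + c2 y_(m-2)], written on the sequence [z] padded by two
    zeros ([z (n+2) = y n]). *)
Definition next_coef (m : nat) (p q r s : CC) : CC :=
  Cdiv (Cadd (Cmul a0 (Cmul (RtoC (INR (S m))) s))
             (Cadd (Cmul (Cadd (Cmul a1 (RtoC (INR m))) c0) r) (Cadd (Cmul c1 q) (Cmul c2 p))))
       (Cmul (RtoC (INR (S m))) (RtoC (INR (S (S m))))).

Fixpoint padded_coef (n : nat) : CC :=
  match n with
  | S (S (S (S m as k1) as k2) as k3) =>
      next_coef m (padded_coef m) (padded_coef k1) (padded_coef k2) (padded_coef k3)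
  | 3 => y1
  | 2 => y0
  | _ => C0
  end.

Definition ode_coef (k : nat) : CC := padded_coef (S (S k)).

Lemma padded_coef_bound m :
  let z := padded_coef in
  Cmod (z (S (S (S (S m))))) * ((INR m + 1) * (INR m + 2)) <=
  Cmod a0 * (INR m + 1) * Cmod (z (S (S (S m)))) + (Cmod a1 * INR m + Cmod c0) * Cmod (z (S (S m)))
  + Cmod c1 * Cmod (z (S m)) + Cmod c2 * Cmod (z m).
Proof.
  intros z. change (z (S (S (S (S m))))) with (next_coef m (z m) (z (S m)) (z (S (S m))) (z (S (S (S m))))).
  unfold next_coef. pose proof (pos_INR m).
  set (num := Cadd _ _).
  assert (E : Cmod (Cdiv num (Cmul (RtoC (INR (S m))) (RtoC (INR (S (S m))))))
              * ((INR m + 1) * (INR m + 2)) = Cmod num).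
  { assert (Hden : Cmul (RtoC (INR (S m))) (RtoC (INR (S (S m)))) <> C0).
    { rewrite !S_INR. intros HH. apply (f_equal fst) in HH. simpl in HH. nra. }
    to_C. rewrite Cmod_div by auto. rewrite Cmod_mult, !Cmod_R, !Rabs_pos_eq, !S_INR by (rewrite ?S_INR; lra).
    field. nra. }
  rewrite E. unfold num. to_C.
  set (z0 := z m). set (z1 := z (S m)). set (z2 := z (S (S m))). set (z3 := z (S (S (S m)))).
  pose proof (Cmod_triangle (a0 * (INR (S m) * z3))%C (((a1 * INR m + c0) * z2) + (c1 * z1 + c2 * z0))%C).
  pose proof (Cmod_triangle ((a1 * INR m + c0) * z2)%C (c1 * z1 + c2 * z0)%C).
  pose proof (Cmod_triangle (c1 * z1)%C (c2 * z0)%C).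
  pose proof (Cmod_triangle (a1 * INR m)%C c0).
  rewrite !Cmod_mult, !Cmod_R, !Rabs_pos_eq, !S_INR in * by (rewrite ?S_INR; lra).
  assert (Cmod (a1 * INR m + c0)%C * Cmod z2 <= (Cmod a1 * INR m + Cmod c0) * Cmod z2)
    by (apply Rmult_le_compat_r; [apply Cmod_ge_0 | lra]).
  lra.
Qed.

Lemma padded_coef_weighted_bound L m : 0 <= L ->
  let T k := Cmod (padded_coef k) * L ^ k in
  T (S (S (S (S m)))) * ((INR m + 1) * (INR m + 2)) <=
  (Cmod a0 * L) * (INR m + 1) * T (S (S (S m)))
  + (Cmod a1 * L ^ 2 * INR m + Cmod c0 * L ^ 2) * T (S (S m))
  + Cmod c1 * L ^ 3 * T (S m) + Cmod c2 * L ^ 4 * T m.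
Proof.
  intros HL T. unfold T. pose proof (padded_coef_bound m) as Hr. cbv zeta in Hr.
  assert (HLm : 0 <= L ^ S (S (S (S m)))) by (apply pow_le; auto).
  apply (Rmult_le_compat_r _ _ _ HLm) in Hr.
  eapply Rle_trans; [|eapply Rle_trans; [exact Hr|]]; simpl pow; right; ring.
Qed.

Lemma padded_coef_growth L : 1 <= L ->
  exists B, forall n, Cmod (padded_coef n) * L ^ n <= B.
Proof.
  intros HL. set (T := fun k => Cmod (padded_coef k) * L ^ k).
  assert (HT : forall k, 0 <= T k)
    by (intros; unfold T; apply Rmult_le_pos; [apply Cmod_ge_0 | apply pow_le; lra]).
  set (K := Cmod a0 * L + Cmod a1 * L ^ 2 + Cmod c0 * L ^ 2 + Cmod c1 * L ^ 3 + Cmod c2 * L ^ 4).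
  destruct (INR_unbounded K) as [N0 HN0].
  set (B := sum_f_R0 T (N0 + 3)).
  exists B. intros n. change (T n <= B).
  assert (Hall : forall n k, (k <= n)%nat -> T k <= B).
  { induction n0 as [|n0 IH]; intros k Hk.
    - apply term_le_partial_sum; auto. lia.
    - destruct (Nat.eq_dec k (S n0)) as [->|]; [|apply IH; lia].
      destruct (Nat.le_gt_cases (S n0) (N0 + 3)); [apply term_le_partial_sum; auto|].
      destruct n0 as [|[|[|m]]]; try lia.
      assert (Hm : K <= INR m) by (apply Rle_trans with (INR N0); [lra | apply le_INR; lia]).
      pose proof (pos_INR m). pose proof (Cmod_ge_0 a0). pose proof (Cmod_ge_0 a1).
      pose proof (Cmod_ge_0 c0). pose proof (Cmod_ge_0 c1). pose proof (Cmod_ge_0 c2).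
      assert (forall j, 0 <= L ^ j) by (intros; apply pow_le; lra).
      apply (recurrence_step (Cmod a0 * L) (Cmod a1 * L ^ 2) (Cmod c0 * L ^ 2) (Cmod c1 * L ^ 3)
               (Cmod c2 * L ^ 4) B (INR m) (T m) (T (S m)) (T (S (S m))) (T (S (S (S m)))));
        try (split; [apply HT | apply IH; lia]); try apply Rmult_le_pos; auto; try lra.
      apply (padded_coef_weighted_bound L m). lra. }
  apply (Hall n n). lia.
Qed.

Lemma entire_ode_coef : entire ode_coef.
Proof.
  intros rho Hr. set (L := 2 * rho + 1).
  destruct (padded_coef_growth L ltac:(unfold L; lra)) as [B HB].
  apply (ex_series_nonneg_le _ (fun n => scal B ((rho / L) ^ n))).
  - intros n. change (scal B ?x) with (B * x).
    assert (HL : 0 < L) by (unfold L; lra).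
    assert (E : rho ^ n = L ^ n * (rho / L) ^ n) by (rewrite <- Rpow_mult_distr; f_equal; field; lra).
    assert (0 <= (rho / L) ^ n) by (apply pow_le, Rdiv_le_0_compat; lra).
    pose proof (Cmod_ge_0 (ode_coef n)). pose proof (pow_le rho n Hr).
    assert (Hy : Cmod (ode_coef n) * L ^ n <= B).
    { eapply Rle_trans; [|apply (HB (S (S n)))]. unfold ode_coef.
      apply Rmult_le_compat_l; [apply Cmod_ge_0|]. simpl pow.
      assert (1 <= L) by (unfold L; lra). pose proof (pow_le L n ltac:(lra)). assert (1 <= L * L) by nra. nra. }
    split; [apply Rmult_le_pos; auto|].
    rewrite E, <- Rmult_assoc. apply Rmult_le_compat_r; auto.
  - apply (@ex_series_scal R_AbsRing R_NormedModule), ex_series_geom.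
    assert (0 < L) by (unfold L; lra).
    rewrite Rabs_pos_eq by (apply Rdiv_le_0_compat; lra).
    apply Rlt_div_l; unfold L; lra.
Qed.

Lemma ode_coef_equation n :
  pderiv (pderiv ode_coef) n = Cadd (Cmul a0 (pderiv ode_coef n)) (Cadd (Cmul a1 (pshift (pderiv ode_coef) n))
     (Cadd (Cmul c0 (ode_coef n)) (Cadd (Cmul c1 (pshift ode_coef n)) (Cmul c2 (pshift (pshift ode_coef) n))))).
Proof.
  set (y := ode_coef). set (z := padded_coef).
  assert (E1 : pshift y n = z (S n)) by (destruct n; reflexivity).
  assert (E2 : pshift (pshift y) n = z n) by (destruct n as [|[|n]]; reflexivity).
  assert (E3 : pshift (pderiv y) n = Cmul (RtoC (INR n)) (z (S (S n))))
    by (destruct n; [simpl; unfold y, ode_coef; to_C; ring | reflexivity]).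
  rewrite E1, E2, E3. unfold pderiv.
  change (y (S (S n))) with (z (S (S (S (S n))))). change (y (S n)) with (z (S (S (S n)))).
  change (y n) with (z (S (S n))).
  change (z (S (S (S (S n))))) with (next_coef n (z n) (z (S n)) (z (S (S n))) (z (S (S (S n))))).
  unfold next_coef. pose proof (pos_INR n).
  assert (0 < INR (S n)) by (rewrite S_INR; lra). assert (0 < INR (S (S n))) by (rewrite !S_INR; lra).
  to_C. field. split; apply RtoC_neq0; lra.
Qed.

Lemma ode_psum_equation Z :
  psum (pderiv (pderiv ode_coef)) Z = Cadd (Cmul (Cadd a0 (Cmul a1 Z)) (psum (pderiv ode_coef) Z))
                          (Cmul (Cadd c0 (Cadd (Cmul c1 Z) (Cmul c2 (Cmul Z Z)))) (psum ode_coef Z)).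
Proof.
  pose proof entire_ode_coef as Ey.
  rewrite (psum_ext _ _ Z ode_coef_equation).
  rewrite !psum_add, !psum_scal, !psum_pshift by auto 10 with entire. to_C. ring.
Qed.

Lemma ode_psum_initial : psum ode_coef C0 = y0 /\ psum (pderiv ode_coef) C0 = y1.
Proof.
  pose proof entire_ode_coef. rewrite !psum_at0 by auto with entire.
  split; [reflexivity|]. unfold pderiv. simpl INR. change (ode_coef 1) with y1. to_C. ring.
Qed.

End PowerSeriesSolution.

Lemma exp_linear_deriv k t : derivable_pt_lim (fun s => exp (k * s)) t (exp (k * t) * k).
Proof.
  eapply derivable_pt_lim_eq.
  - apply (derivable_pt_lim_comp (fun s => k * s) exp t k (exp (k * t))).
    + eapply derivable_pt_lim_eq; [apply (derivable_pt_lim_scal (fun s => s) k t 1), derivable_pt_lim_id | ring].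
    + apply derivable_pt_lim_exp.
  - ring.
Qed.

(** Gronwall-type vanishing on [[0, t]]: if [E >= 0], [E 0 = 0] and
    [E' <= K E] there, then [E(s) e^(-K s)] is nonincreasing, so [E t = 0]. *)
Lemma energy_vanishes_right (E E' : R -> R) K t : 0 < t ->
  (forall s, derivable_pt_lim E s (E' s)) -> (forall s, 0 <= E s) -> E 0 = 0 ->
  (forall s, 0 <= s <= t -> E' s <= K * E s) -> E t = 0.
Proof.
  intros Ht HE Hpos H0 HK.
  destruct (MVT_cor2 (fun s => E s * exp (- K * s))
              (fun s => E' s * exp (- K * s) + E s * (exp (- K * s) * (- K))) 0 t Ht) as [c [Hc Hct]].
  { intros c _. exact (derivable_pt_lim_mult E _ c _ _ (HE c) (exp_linear_deriv (- K) c)). }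
  rewrite H0, Rmult_0_l, Rminus_0_r in Hc.
  assert (Hslope : (E' c - K * E c) * exp (- K * c) <= 0)
    by (apply Rmult_le_0_r; [specialize (HK c ltac:(lra)); lra | apply Rlt_le, exp_pos]).
  assert (E t * exp (- K * t) <= 0) by (rewrite Hc; nra).
  pose proof (exp_pos (- K * t)). pose proof (Hpos t). nra.
Qed.

(** Hence a nonnegative function with [E 0 = 0] and [|E'| <= K E] on every
    bounded interval vanishes identically (for [t < 0] apply the previous
    lemma to [s |-> E (-s)]). *)
Lemma energy_vanishes (E E' : R -> R) :
  (forall t, derivable_pt_lim E t (E' t)) -> (forall t, 0 <= E t) -> E 0 = 0 ->
  (forall T, exists K, forall t, Rabs t <= T -> Rabs (E' t) <= K * E t) ->
  forall t, E t = 0.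
Proof.
  intros HE Hpos H0 Hbd t. destruct (Hbd (Rabs t)) as [K HK].
  destruct (Rtotal_order t 0) as [Ht|[->|Ht]]; auto.
  - replace t with (- (- t)) by ring.
    apply (energy_vanishes_right (fun s => E (- s)) (fun s => - E' (- s)) K (- t)); auto; try lra.
    + intros s. eapply derivable_pt_lim_eq.
      * apply (derivable_pt_lim_comp (fun s => - s) E s (-1) (E' (- s))); [|apply HE].
        eapply derivable_pt_lim_eq; [apply derivable_pt_lim_opp, derivable_pt_lim_id | ring].
      * ring.
    + rewrite Ropp_0. auto.
    + intros s Hs. pose proof (Rle_abs (- E' (- s))). rewrite Rabs_Ropp in *.
      pose proof (HK (- s) ltac:(rewrite Rabs_Ropp, (Rabs_pos_eq s), (Rabs_left t) by lra; lra)). lra.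
  - apply (energy_vanishes_right E E' K t); auto.
    intros s Hs. pose proof (Rle_abs (E' s)).
    pose proof (HK s ltac:(rewrite !Rabs_pos_eq; lra)). lra.
Qed.

Lemma Cdot_le (x y : CC) : Rabs (fst x * fst y + snd x * snd y) <= Cmod x * Cmod y.
Proof.
  pose proof (re_le_Cmod (Cmult (Cconj x) y)) as H.
  rewrite Cmod_mult, Cmod_conj in H. destruct x, y. unfold Re, Cmult, Cconj in H; simpl in *.
  replace (r * r1 - - r0 * r2) with (r * r1 + r0 * r2) in H by ring. exact H.
Qed.

Lemma Cmod_sqr (x : CC) : Cmod x * Cmod x = fst x * fst x + snd x * snd x.
Proof. pose proof (Cmod2_alt x). simpl in H. unfold Re, Im in H. nra. Qed.

(** Uniqueness for [w'' = al w' + be w] with locally bounded coefficients: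
    the energy [|w|^2 + |w'|^2] satisfies [|E'| <= (1 + 3M) E]. *)
Lemma ode_unique (W W1 al be : R -> CC) :
  (forall h, Cderiv_at W h (W1 h)) ->
  (forall h, Cderiv_at W1 h (Cadd (Cmul (al h) (W1 h)) (Cmul (be h) (W h)))) ->
  (forall T, exists M, 0 <= M /\ forall h, Rabs h <= T -> Cmod (al h) <= M /\ Cmod (be h) <= M) ->
  W 0 = C0 -> W1 0 = C0 -> forall h, W h = C0.
Proof.
  intros HW HW1 Hbd H0 H10.
  set (Z := fun h => Cadd (Cmul (al h) (W1 h)) (Cmul (be h) (W h))).
  set (dot := fun x y : CC => fst x * fst y + snd x * snd y).
  set (E := fun h => dot (W h) (W h) + dot (W1 h) (W1 h)).
  set (E' := fun h => 2 * dot (W h) (W1 h) + 2 * dot (W1 h) (Z h)).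
  assert (HE : forall h, E h = 0).
  { apply (energy_vanishes E E').
    - intros h. destruct (HW h) as [A1 A2]. destruct (HW1 h) as [B1 B2]. fold (Z h) in B1, B2.
      eapply derivable_pt_lim_eq.
      + exact (derivable_pt_lim_plus _ _ _ _ _
          (derivable_pt_lim_plus _ _ _ _ _ (derivable_pt_lim_mult _ _ _ _ _ A1 A1) (derivable_pt_lim_mult _ _ _ _ _ A2 A2))
          (derivable_pt_lim_plus _ _ _ _ _ (derivable_pt_lim_mult _ _ _ _ _ B1 B1) (derivable_pt_lim_mult _ _ _ _ _ B2 B2))).
      + unfold E', dot. ring.
    - intros h. unfold E, dot. nra.
    - unfold E, dot. rewrite H0, H10. simpl. ring.
    - intros T. destruct (Hbd T) as [M [HM HMT]]. exists (1 + 3 * M).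
      intros h Hh. destruct (HMT h Hh) as [Ha Hb].
      pose proof (Cdot_le (W h) (W1 h)). pose proof (Cdot_le (W1 h) (Z h)).
      set (a := Cmod (W h)) in *. set (b := Cmod (W1 h)) in *.
      assert (0 <= a) by apply Cmod_ge_0. assert (0 <= b) by apply Cmod_ge_0.
      assert (HZ : Cmod (Z h) <= M * b + M * a).
      { unfold Z. to_C. eapply Rle_trans; [apply Cmod_triangle|]. rewrite !Cmod_mult.
        apply Rplus_le_compat; apply Rmult_le_compat_r; auto. }
      assert (HEh : E h = a * a + b * b) by (unfold E, dot, a, b; rewrite !Cmod_sqr; ring).
      assert (b * Cmod (Z h) <= b * (M * b + M * a)) by (apply Rmult_le_compat_l; auto).
      assert (0 <= M * ((a - b) * (a - b))) by (apply Rmult_le_pos; [lra | apply Rle_0_sqr]).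
      assert (HE' : Rabs (E' h) <= 2 * (a * b) + 2 * (b * Cmod (Z h))).
      { unfold E', dot. eapply Rle_trans; [apply Rabs_triang|].
        rewrite !Rabs_mult, (Rabs_pos_eq 2) by lra. lra. }
      assert (0 <= M * (a * a)) by (apply Rmult_le_pos; nra).
      assert (0 <= (a - b) * (a - b)) by apply Rle_0_sqr.
      eapply Rle_trans; [exact HE'|]. rewrite HEh. nra. }
  intros h. specialize (HE h). unfold E, dot in HE. apply injective_projections; simpl; nra.
Qed.

Lemma polynomial_coefs_bounded (a0 a1 c0 c1 c2 : CC) T : exists M, 0 <= M /\
  forall h, Rabs h <= T ->
    Cmod (Cadd a0 (Cmul a1 (RtoC h))) <= M /\
    Cmod (Cadd c0 (Cadd (Cmul c1 (RtoC h)) (Cmul c2 (Cmul (RtoC h) (RtoC h))))) <= M.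
Proof.
  set (t := Rabs T).
  exists (Cmod a0 + Cmod a1 * t + (Cmod c0 + Cmod c1 * t + Cmod c2 * (t * t))).
  pose proof (Rabs_pos T). pose proof (Cmod_ge_0 a0). pose proof (Cmod_ge_0 a1).
  pose proof (Cmod_ge_0 c0). pose proof (Cmod_ge_0 c1). pose proof (Cmod_ge_0 c2).
  assert (0 <= Cmod a1 * t) by (apply Rmult_le_pos; auto).
  assert (0 <= Cmod c1 * t) by (apply Rmult_le_pos; auto).
  assert (0 <= Cmod c2 * (t * t)) by (apply Rmult_le_pos; [|apply Rmult_le_pos]; auto).
  split; [lra|]. intros h Hh.
  assert (Ah : Cmod (RtoC h) <= t) by (to_C; rewrite Cmod_R; pose proof (Rle_abs T); unfold t; lra).
  pose proof (Cmod_ge_0 (RtoC h)).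
  assert (Cmod a1 * Cmod (RtoC h) <= Cmod a1 * t) by (apply Rmult_le_compat_l; auto).
  assert (Cmod c1 * Cmod (RtoC h) <= Cmod c1 * t) by (apply Rmult_le_compat_l; auto).
  assert (Cmod c2 * (Cmod (RtoC h) * Cmod (RtoC h)) <= Cmod c2 * (t * t))
    by (apply Rmult_le_compat_l; auto; apply Rmult_le_compat; auto).
  to_C. split.
  - eapply Rle_trans; [apply Cmod_triangle|]. rewrite Cmod_mult. lra.
  - eapply Rle_trans; [apply Cmod_triangle|]. eapply Rle_trans; [apply Rplus_le_compat_l, Cmod_triangle|].
    rewrite !Cmod_mult. lra.
Qed.

(** Analyticity at [x0]: a solution of [u'' = (a0 + a1 (x-x0)) u' +
    (c0 + c1 (x-x0) + c2 (x-x0)^2) u] is the sum of the power series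
    [ode_coef] built from [u(x0)] and [u'(x0)], because both solve the same
    initial value problem. *)
Lemma analytic_from_ode (u u1 u2 : R -> CC) (x0 : R) (a0 a1 c0 c1 c2 : CC) :
  (forall x, Cderiv_at u x (u1 x)) -> (forall x, Cderiv_at u1 x (u2 x)) ->
  (forall h, u2 (x0 + h) = Cadd (Cmul (Cadd a0 (Cmul a1 (RtoC h))) (u1 (x0 + h)))
       (Cmul (Cadd c0 (Cadd (Cmul c1 (RtoC h)) (Cmul c2 (Cmul (RtoC h) (RtoC h))))) (u (x0 + h)))) ->
  exists a, forall x, Cseries_cv (fun n => Cmul (a n) (Cpown (RtoC (x - x0)) n)) (u x).
Proof.
  intros Hu Hu1 Hode.
  set (y := ode_coef a0 a1 c0 c1 c2 (u x0) (u1 x0)).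
  assert (Ey : entire y) by apply entire_ode_coef.
  assert (Hser : forall b h, entire b -> Cderiv_at (fun t => psum b (RtoC t)) h (psum (pderiv b) (RtoC h))).
  { intros b h Hb. eapply Cderiv_eq; [apply (psum_chain b (fun t => RtoC t)); auto; apply Cderiv_id|].
    to_C. ring. }
  set (al := fun h => Cadd a0 (Cmul a1 (RtoC h))).
  set (be := fun h => Cadd c0 (Cadd (Cmul c1 (RtoC h)) (Cmul c2 (Cmul (RtoC h) (RtoC h))))).
  set (W := fun h => Csub (u (x0 + h)) (psum y (RtoC h))).
  set (W1 := fun h => Csub (u1 (x0 + h)) (psum (pderiv y) (RtoC h))).
  destruct (ode_psum_initial a0 a1 c0 c1 c2 (u x0) (u1 x0)) as [Hy0 Hy1]. fold y in Hy0, Hy1.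
  assert (HW : forall h, W h = C0).
  { apply (ode_unique W W1 al be).
    - intros h. apply Cderiv_sub; [apply Cderiv_translate, Hu | apply Hser; auto].
    - intros h. eapply Cderiv_eq.
      + apply Cderiv_sub; [apply Cderiv_translate, Hu1 | apply Hser; auto with entire].
      + rewrite Hode, (ode_psum_equation a0 a1 c0 c1 c2 (u x0) (u1 x0)). fold y.
        unfold W, W1, al, be. to_C. ring.
    - intros T. apply polynomial_coefs_bounded.
    - unfold W. rewrite Rplus_0_r. change (RtoC 0) with C0. rewrite Hy0. to_C. ring.
    - unfold W1. rewrite Rplus_0_r. change (RtoC 0) with C0. rewrite Hy1. to_C. ring. }
  exists y. intros x. pose proof (psum_cv y (RtoC (x - x0)) Ey) as Hc.
  replace (u x) with (psum y (RtoC (x - x0))); auto.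
  pose proof (HW (x - x0)) as Hx. unfold W in Hx. replace (x0 + (x - x0)) with x in Hx by ring.
  transitivity (Csub (u x) (Csub (u x) (psum y (RtoC (x - x0))))); [to_C; ring|].
  rewrite Hx. to_C. ring.
Qed.

(** Since [b20 <> 0], [B u = 0] is the second order equation
    [u'' = -(i/b20) (b11 x + b10) u' + (1/b20) (b02 x^2 + b01 x + b00) u] with
    polynomial coefficients, so every solution is real-analytic. *)
Lemma analytic_of_solves b20 b11 b02 b10 b01 b00 u : b20 <> C0 ->
  solves_B b20 b11 b02 b10 b01 b00 u -> C_analytic u.
Proof.
  intros Hb [u1 [u2 H]] x0. exists 1. split; [lra|].
  destruct (analytic_from_ode u u1 u2 x0
    (Cdiv (Copp (Cmul Ci (Cadd (Cmul b11 (RtoC x0)) b10))) b20)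
    (Cdiv (Copp (Cmul Ci b11)) b20)
    (Cdiv (Cadd (Cmul b02 (Cmul (RtoC x0) (RtoC x0))) (Cadd (Cmul b01 (RtoC x0)) b00)) b20)
    (Cdiv (Cadd (Cmul (RtoC 2) (Cmul b02 (RtoC x0))) b01) b20)
    (Cdiv b02 b20)) as [a Ha].
  - intros x. apply H.
  - intros x. apply H.
  - intros h. destruct (H (x0 + h)) as [_ [_ HB]].
    match goal with |- _ = ?R =>
      transitivity (Cadd R (Cdiv (Copp (B_apply b20 b11 b02 b10 b01 b00 u u1 u2 (x0 + h))) b20)) end.
    + unfold B_apply. rewrite RtoC_plus. to_C. field. auto.
    + rewrite HB. to_C. field. auto.
  - exists a. intros x _. apply Ha.
Qed.

Theorem proposition4p9 (b20 b11 b02 b10 b01 b00 : CC) :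
  b20 <> C0 -> Delta2 b20 b11 b02 <> C0 ->
  C_analytic (u_sol1 b20 b11 b02 b10 b01 b00) /\
  C_analytic (u_sol2 b20 b11 b02 b10 b01 b00) /\
  solves_B b20 b11 b02 b10 b01 b00 (u_sol1 b20 b11 b02 b10 b01 b00) /\
  solves_B b20 b11 b02 b10 b01 b00 (u_sol2 b20 b11 b02 b10 b01 b00) /\
  lin_indep2 (u_sol1 b20 b11 b02 b10 b01 b00) (u_sol2 b20 b11 b02 b10 b01 b00).
Proof.
  intros Hb HD.
  pose proof (u_sol1_solves b20 b11 b02 b10 b01 b00 Hb HD) as S1.
  pose proof (u_sol2_solves b20 b11 b02 b10 b01 b00 Hb HD) as S2.
  split; [|split; [|split; [|split]]].
  - exact (analytic_of_solves _ _ _ _ _ _ _ Hb S1).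
  - exact (analytic_of_solves _ _ _ _ _ _ _ Hb S2).
  - exact S1.
  - exact S2.
  - exact (u_sol_lin_indep b20 b11 b02 b10 b01 b00).
Qed.
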